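(* Let $\mathcal{G}$ be a finite groupoid, $R$ a unital ring, $\alpha=(\{D_g\},\{\alpha_g\},\{w_{g,h}\})$ a globalizable groupoid twisted partial action of $\mathcal{G}$ on $R$, and $\beta=(\{E_g\},\{\beta_g\},\{u_{g,h}\})$ a globalization of $\alpha$, a groupoid twisted global action of $\mathcal{G}$ on a ring $T$. Then the rings $R \rtimes_{\alpha,w} \mathcal{G}$ and $T \rtimes_{\beta,u} \mathcal{G}$ are Morita equivalent.
   Context: Rings are associative, not necessarily unital. Groupoid: nonempty set $\mathcal{G}$ with partial associative product, each $g$ having right identity $d(g)=g^{-1}g$, left identity $r(g)=gg^{-1}$ and inverse $g^{-1}$; $gh$ defined iff $d(g)=r(h)$; $\mathcal{G}_0$ identities, $\mathcal{G}^2$ composable pairs, $\mathcal{G}^3$ composable triples. $\mathcal{M}(A)$ denotes the multiplier ring of a ring $A$ (pairs $(R,L)$, $R$ a right-module endomorphism written on the right, $L$ a left-module endomorphism, $(aR)b=a(Lb)$; $aw=(a)R$, $wa=L(a)$). A groupoid twisted partial action of $\mathcal{G}$ on $R$: $(\{D_g\},\{\alpha_g\},\{w_{g,h}\})$ with $D_{r(g)}$ an ideal of $R$, $D_g$ an ideal of $D_{r(g)}$, $\alpha_g:D_{g^{-1}}\to D_g$ ring isomorphisms, $w_{g,h}$ invertible in $\mathcal{M}(D_gD_{gh})$ for $(g,h)\in\mathcal{G}^2$, such that for all $(g,h,t)\in\mathcal{G}^3$: $D_g^2=D_g$, $D_gD_h=D_hD_g$; $D_e=D_{r(e)}$, $\alpha_e=\mathrm{id}$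 ($e\in\mathcal{G}_0$); $\alpha_g(D_{g^{-1}}D_h)=D_gD_{gh}$; $\alpha_g\alpha_h(a)=w_{g,h}\alpha_{gh}(a)w_{g,h}^{-1}$ for $a\in D_{h^{-1}}D_{h^{-1}g^{-1}}$; $w_{r(g),g}=w_{g,d(g)}=\mathrm{id}_{\mathcal{M}(D_g)}$; $\alpha_g(aw_{h,t})w_{g,ht}=\alpha_g(a)w_{g,h}w_{gh,t}$ for $a\in D_{g^{-1}}D_hD_{ht}$. It is global if $D_g=D_{r(g)}$ for all $g$. A global action $\beta$ on $T$ is a globalization of $\alpha$ (and $\alpha$ is globalizable) if there are ring monomorphisms $\varphi_e:D_e\to E_e$ ($e\in\mathcal{G}_0$) with: $\varphi_e(D_e)$ an ideal of $E_e$; $E_g=\sum_{r(h)=r(g)}\beta_h(\varphi_{d(h)}(D_{d(h)}))$; $\varphi_{r(g)}(D_g)=\varphi_{r(g)}(D_{r(g)})\cap\beta_g(\varphi_{d(g)}(D_{d(g)}))$; $\beta_g\varphi_{d(g)}=\varphi_{r(g)}\alpha_g$ on $D_{g^{-1}}$; $\varphi_{r(g)}(aw_{g,h})=\varphi_{r(g)}(a)u_{g,h}$, $\varphi_{r(g)}(w_{g,h}a)=u_{g,h}\varphi_{r(g)}(a)$ for $a\in D_gD_{gh}$. Twisted crossed product $R\rtimes_{\alpha,w}\mathcal{G}=\bigoplus_gD_g\delta_g$ with $(a_g\delta_g)(b_h\delta_h)=\alpha_g(\alpha_g^{-1}(a_g)b_h)w_{g,h}\delta_{gh}$ if $(g,h)\in\mathcal{G}^2$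 and $0$ otherwise; similarly for $T\rtimes_{\beta,u}\mathcal{G}$. Two rings are Morita equivalent if there is a Morita context between them with both pairings surjective (equivalently, their module categories are equivalent). *)

From mathcomp Require Import all_boot.
From Stdlib Require List.

Set Implicit Arguments.
Unset Strict Implicit.
Unset Printing Implicit Defensive.

Record rng := Rng {
  rcar :> Type;
  radd : rcar -> rcar -> rcar;
  rzero : rcar;
  ropp : rcar -> rcar;
  rmul : rcar -> rcar -> rcar;
  raddA : forall x y z, radd x (radd y z) = radd (radd x y) z;
  raddC : forall x y, radd x y = radd y x;
  radd0 : forall x, radd rzero x = x;
  raddN : forall x, radd (ropp x) x = rzero;
  rmulA : forall x y z, rmul x (rmul y z) = rmul (rmul x y) z;
  rmulDl : forall x y z, rmul (radd x y) z = radd (rmul x z) (rmul y z);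
  rmulDr : forall x y z, rmul x (radd y z) = radd (rmul x y) (rmul x z) }.

Arguments radd {r}. Arguments rzero {r}. Arguments ropp {r}. Arguments rmul {r}.

Definition unital (R : rng) : Prop :=
  exists one : R, forall x : R, rmul one x = x /\ rmul x one = x.

Definition seteq (T : Type) (A B : T -> Prop) : Prop := forall x, A x <-> B x.

Definition image (T U : Type) (f : T -> U) (A : T -> Prop) : U -> Prop :=
  fun y => exists x, A x /\ y = f x.

Definition sumprod (R : rng) (s : seq (R * R)%type) : R :=
  foldr (fun p acc => radd (rmul p.1 p.2) acc) rzero s.

Definition setmul (R : rng) (A B : R -> Prop) : R -> Prop :=
  fun x => exists s : seq (R * R)%type,
    List.Forall (fun p => A p.1 /\ B p.2) s /\ x = sumprod s.

Definition is_ideal_in (R : rng) (I J : R -> Prop) : Prop :=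
  (forall x, I x -> J x) /\ I rzero /\
  (forall x y, I x -> I y -> I (radd x y)) /\
  (forall x, I x -> I (ropp x)) /\
  (forall a b, I a -> J b -> I (rmul a b) /\ I (rmul b a)).

Definition is_ideal (R : rng) (I : R -> Prop) : Prop :=
  is_ideal_in I (fun _ => True).

Definition ring_iso_on (R : rng) (A B : R -> Prop) (f finv : R -> R) : Prop :=
  (forall x, A x -> B (f x)) /\ (forall y, B y -> A (finv y)) /\
  (forall x, A x -> finv (f x) = x) /\ (forall y, B y -> f (finv y) = y) /\
  (forall x y, A x -> A y -> f (radd x y) = radd (f x) (f y)) /\
  (forall x y, A x -> A y -> f (rmul x y) = rmul (f x) (f y)).

(* Multipliers of the ring I: w = (Rm, Lm), a w = Rm a, w a = Lm a.
   (Values outside I are irrelevant.) *)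
Definition is_mult (R : rng) (I : R -> Prop) (Rm Lm : R -> R) : Prop :=
  (forall a, I a -> I (Rm a) /\ I (Lm a)) /\
  (forall a b, I a -> I b ->
     Rm (radd a b) = radd (Rm a) (Rm b) /\ Lm (radd a b) = radd (Lm a) (Lm b)) /\
  (forall a b, I a -> I b -> Rm (rmul a b) = rmul a (Rm b)) /\
  (forall a b, I a -> I b -> Lm (rmul a b) = rmul (Lm a) b) /\
  (forall a b, I a -> I b -> rmul (Rm a) b = rmul a (Lm b)).

Definition mult_inverse (R : rng) (I : R -> Prop) (Rm Lm Rm' Lm' : R -> R) : Prop :=
  forall a, I a ->
    Rm' (Rm a) = a /\ Lm (Lm' a) = a /\ Rm (Rm' a) = a /\ Lm' (Lm a) = a.

Record groupoid := Groupoid {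
  gcar :> finType;
  gmul : gcar -> gcar -> gcar;   (* only meaningful on composable pairs *)
  ginv : gcar -> gcar;
  gnonempty : exists g : gcar, True;
  gcomp_dr : forall g h, gmul (ginv g) g = gmul h (ginv h) ->
     gmul (ginv (gmul g h)) (gmul g h) = gmul (ginv h) h /\
     gmul (gmul g h) (ginv (gmul g h)) = gmul g (ginv g);
  gassoc : forall g h k, gmul (ginv g) g = gmul h (ginv h) ->
     gmul (ginv h) h = gmul k (ginv k) ->
     gmul (gmul g h) k = gmul g (gmul h k);
  gunitr : forall g, gmul g (gmul (ginv g) g) = g;
  gunitl : forall g, gmul (gmul g (ginv g)) g = g;
  ginv_d : forall g, gmul (ginv (ginv g)) (ginv g) = gmul g (ginv g);
  ginv_r : forall g, gmul (ginv g) (ginv (ginv g)) = gmul (ginv g) g;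
  gid_d : forall g, let e := gmul (ginv g) g in
     gmul (ginv e) e = e /\ gmul e (ginv e) = e;
  gid_r : forall g, let e := gmul g (ginv g) in
     gmul (ginv e) e = e /\ gmul e (ginv e) = e }.

Arguments gmul {_} _ _. Arguments ginv {_} _.

Definition gd (G : groupoid) (g : G) : G := gmul (ginv g) g.
Definition gr (G : groupoid) (g : G) : G := gmul g (ginv g).
Definition composable (G : groupoid) (g h : G) : Prop := gd g = gr h.
Definition is_identity (G : groupoid) (e : G) : Prop := exists g, e = gd g.

Record tpa_data (G : groupoid) (R : rng) := TpaData {
  Dm : G -> R -> Prop;
  al : G -> R -> R;               (* alpha_g : D_{g^-1} -> D_g *)
  ali : G -> R -> R;              (* alpha_g^{-1} : D_g -> D_{g^-1} *)
  wR : G -> G -> R -> R;          (* a |-> a w_{g,h} *)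
  wL : G -> G -> R -> R;          (* a |-> w_{g,h} a *)
  wiR : G -> G -> R -> R;         (* a |-> a w_{g,h}^{-1} *)
  wiL : G -> G -> R -> R }.       (* a |-> w_{g,h}^{-1} a *)

Definition is_tpa (G : groupoid) (R : rng) (A : tpa_data G R) : Prop :=
  let D := Dm A in
  (forall g, is_ideal (D (gr g))) /\
  (forall g, is_ideal_in (D g) (D (gr g))) /\
  (forall g, ring_iso_on (D (ginv g)) (D g) (al A g) (ali A g)) /\
  (forall g h, composable g h ->
     let I := setmul (D g) (D (gmul g h)) in
     is_mult I (wR A g h) (wL A g h) /\ is_mult I (wiR A g h) (wiL A g h) /\
     mult_inverse I (wR A g h) (wL A g h) (wiR A g h) (wiL A g h)) /\
  (forall e, is_identity e ->
     seteq (D e) (D (gr e)) /\ (forall a, D e a -> al A e a = a)) /\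
  (forall g h t, composable g h -> composable h t ->
     seteq (setmul (D g) (D g)) (D g) /\
     seteq (setmul (D g) (D h)) (setmul (D h) (D g)) /\
     seteq (image (al A g) (setmul (D (ginv g)) (D h)))
           (setmul (D g) (D (gmul g h))) /\
     (forall a, setmul (D (ginv h)) (D (gmul (ginv h) (ginv g))) a ->
        al A g (al A h a) = wiR A g h (wL A g h (al A (gmul g h) a))) /\
     (forall a, D g a -> wR A (gr g) g a = a /\ wL A (gr g) g a = a) /\
     (forall a, D g a -> wR A g (gd g) a = a /\ wL A g (gd g) a = a) /\
     (forall a, setmul (setmul (D (ginv g)) (D h)) (D (gmul h t)) a ->
        wR A g (gmul h t) (al A g (wR A h t a)) =
        wR A (gmul g h) t (wR A g h (al A g a)))).

Definition is_global (G : groupoid) (R : rng) (A : tpa_data G R) : Prop :=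
  forall g, seteq (Dm A g) (Dm A (gr g)).

(* beta (on T) is a globalization of alpha (on R) via phi_e : D_e -> E_e *)
Definition is_globalization (G : groupoid) (R T : rng)
    (A : tpa_data G R) (B : tpa_data G T) (phi : G -> R -> T) : Prop :=
  let D := Dm A in let E := Dm B in
  is_global B /\
  (forall e, is_identity e ->
     (forall x, D e x -> E e (phi e x)) /\
     (forall x y, D e x -> D e y -> phi e (radd x y) = radd (phi e x) (phi e y)) /\
     (forall x y, D e x -> D e y -> phi e (rmul x y) = rmul (phi e x) (phi e y)) /\
     (forall x y, D e x -> D e y -> phi e x = phi e y -> x = y) /\
     is_ideal_in (image (phi e) (D e)) (E e)) /\
  (forall g, seteq (E g)
     (fun x => exists c : G -> T,
        (forall h, gr h = gr g -> image (al B h) (image (phi (gd h)) (D (gd h))) (c h)) /\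
        x = \big[@radd T/@rzero T]_(h : G | gr h == gr g) c h)) /\
  (forall g, seteq (image (phi (gr g)) (D g))
     (fun y => image (phi (gr g)) (D (gr g)) y /\
               image (al B g) (image (phi (gd g)) (D (gd g))) y)) /\
  (forall g a, D (ginv g) a -> al B g (phi (gd g) a) = phi (gr g) (al A g a)) /\
  (forall g h, composable g h -> forall a, setmul (D g) (D (gmul g h)) a ->
     phi (gr g) (wR A g h a) = wR B g h (phi (gr g) a) /\
     phi (gr g) (wL A g h a) = wL B g h (phi (gr g) a)).

(* Rings given as a distinguished subset of a type with operations     *)
(* (used for crossed products, whose elements are the f : G -> R with  *)
(* f g in D_g, i.e. sum_g f(g) delta_g).                               *)
Record sring := SRing {
  scar : Type;
  smem : scar -> Prop;
  sadd : scar -> scar -> scar;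
  szero : scar;
  sopp : scar -> scar;
  smul : scar -> scar -> scar }.

Definition crossed (G : groupoid) (R : rng) (A : tpa_data G R) : sring :=
  @SRing (G -> R)
    (fun f => forall g, Dm A g (f g))
    (fun f f' g => radd (f g) (f' g))
    (fun _ => rzero)
    (fun f g => ropp (f g))
    (fun f f' k =>
       \big[@radd R/@rzero R]_(g : G)
         \big[@radd R/@rzero R]_(h : G | (gd g == gr h) && (gmul g h == k))
            wR A g h (al A g (rmul (ali A g (f g)) (f' h)))).

Record abgrp := AbGrp {
  acar :> Type;
  aadd : acar -> acar -> acar;
  azero : acar;
  aopp : acar -> acar;
  aaddA : forall x y z, aadd x (aadd y z) = aadd (aadd x y) z;
  aaddC : forall x y, aadd x y = aadd y x;
  aadd0 : forall x, aadd azero x = x;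
  aaddN : forall x, aadd (aopp x) x = azero }.

Arguments aadd {_} _ _.

(* Morita context between A and B with both pairings surjective *)
Definition MoritaEquiv (A B : sring) : Prop :=
  exists (M N : abgrp)
         (lA : scar A -> M -> M) (rB : M -> scar B -> M)
         (lB : scar B -> N -> N) (rA : N -> scar A -> N)
         (tau : M -> N -> scar A) (sig : N -> M -> scar B),
  (forall a m m', smem a -> lA a (aadd m m') = aadd (lA a m) (lA a m')) /\
  (forall a a' m, smem a -> smem a' -> lA (sadd a a') m = aadd (lA a m) (lA a' m)) /\
  (forall a a' m, smem a -> smem a' -> lA (smul a a') m = lA a (lA a' m)) /\
  (forall b m m', smem b -> rB (aadd m m') b = aadd (rB m b) (rB m' b)) /\
  (forall b b' m, smem b -> smem b' -> rB m (sadd b b') = aadd (rB m b) (rB m b')) /\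
  (forall b b' m, smem b -> smem b' -> rB m (smul b b') = rB (rB m b) b') /\
  (forall a b m, smem a -> smem b -> lA a (rB m b) = rB (lA a m) b) /\
  (forall b n n', smem b -> lB b (aadd n n') = aadd (lB b n) (lB b n')) /\
  (forall b b' n, smem b -> smem b' -> lB (sadd b b') n = aadd (lB b n) (lB b' n)) /\
  (forall b b' n, smem b -> smem b' -> lB (smul b b') n = lB b (lB b' n)) /\
  (forall a n n', smem a -> rA (aadd n n') a = aadd (rA n a) (rA n' a)) /\
  (forall a a' n, smem a -> smem a' -> rA n (sadd a a') = aadd (rA n a) (rA n a')) /\
  (forall a a' n, smem a -> smem a' -> rA n (smul a a') = rA (rA n a) a') /\
  (forall a b n, smem a -> smem b -> lB b (rA n a) = rA (lB b n) a) /\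
  (forall m n, smem (tau m n)) /\
  (forall m m' n, tau (aadd m m') n = sadd (tau m n) (tau m' n)) /\
  (forall m n n', tau m (aadd n n') = sadd (tau m n) (tau m n')) /\
  (forall m n b, smem b -> tau (rB m b) n = tau m (lB b n)) /\
  (forall a m n, smem a -> tau (lA a m) n = smul a (tau m n)) /\
  (forall a m n, smem a -> tau m (rA n a) = smul (tau m n) a) /\
  (forall n m, smem (sig n m)) /\
  (forall n n' m, sig (aadd n n') m = sadd (sig n m) (sig n' m)) /\
  (forall n m m', sig n (aadd m m') = sadd (sig n m) (sig n m')) /\
  (forall n m a, smem a -> sig (rA n a) m = sig n (lA a m)) /\
  (forall b n m, smem b -> sig (lB b n) m = smul b (sig n m)) /\
  (forall b n m, smem b -> sig n (rB m b) = smul (sig n m) b) /\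
  (forall m n m', lA (tau m n) m' = rB m (sig n m')) /\
  (forall n m n', lB (sig n m) n' = rA n (tau m n')) /\
  (forall a, smem a -> exists s : seq (M * N)%type,
     a = foldr (fun p acc => sadd (tau p.1 p.2) acc) (szero A) s) /\
  (forall b, smem b -> exists s : seq (N * M)%type,
     b = foldr (fun p acc => sadd (sig p.1 p.2) acc) (szero B) s).

From Pilot Require Import Defs.
From mathcomp Require Import all_boot.
From HB Require Import structures.
From Stdlib Require Import FunctionalExtensionality ProofIrrelevance ClassicalEpsilon.

Set Implicit Arguments.
Unset Strict Implicit.
Unset Printing Implicit Defensive.

Local Notation image := Defs.image.

(* Identify R x G with its image under Phi (a delta_g) = phi_{r(g)}(a) delta_g inside
   T x G, and let M = (+)_g phi(D_{r(g)}) delta_g and N = (+)_g beta_g(phi(D_{d(g)})) delta_g.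
   Since each phi(D_e) is an ideal of E_e and the twists are multipliers, M is a right
   (T x G)-module and N a left one, and the products MN and NM land in Phi(R x G) and
   T x G. Multiplication in T x G therefore gives a Morita context, and its pairings
   are onto because D_g = D_g^2 and E_g = sum_{r(h) = r(g)} beta_h(phi(D_{d(h)})). *)

#[warnings="-redundant-canonical-projection"]
HB.instance Definition _ (X : rng) :=
  Monoid.isComLaw.Build X rzero radd (@raddA X) (@raddC X) (@radd0 X).

Section RngTheory.
Variable X : rng.
Implicit Types (x y z : X) (S A B I J : X -> Prop).

Lemma addr0 x : radd x rzero = x.
Proof. by rewrite raddC radd0. Qed.

Lemma addrN x : radd x (ropp x) = rzero.
Proof. by rewrite raddC raddN. Qed.

Lemma addrI x y z : radd x y = radd x z -> y = z.
Proof. by move=> /(congr1 (radd (ropp x))); rewrite !raddA raddN !radd0. Qed.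

Lemma addr_fix0 x y : radd x y = x -> y = rzero.
Proof. by move=> H; apply: (@addrI x); rewrite H addr0. Qed.

Lemma mul0r x : rmul rzero x = rzero.
Proof. by apply: (@addr_fix0 (rmul rzero x)); rewrite -rmulDl radd0. Qed.

Lemma mulr0 x : rmul x rzero = rzero.
Proof. by apply: (@addr_fix0 (rmul x rzero)); rewrite -rmulDr radd0. Qed.

Lemma oppr_uniq x y : radd y x = rzero -> y = ropp x.
Proof. by move=> H; apply: (@addrI x); rewrite raddC H addrN. Qed.

Definition included A B := forall x, A x -> B x.
Definition subgroup S :=
  S rzero /\ (forall x y, S x -> S y -> S (radd x y)) /\ (forall x, S x -> S (ropp x)).
Definition mul_closed S := forall x y, S x -> S y -> S (rmul x y).
Definition ideal_of J I :=
  included J I /\ (forall x y, J x -> I y -> J (rmul x y) /\ J (rmul y x)).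
Definition idempotent J := forall x, J x -> setmul J J x.

Lemma is_ideal_in_split J I : is_ideal_in J I -> subgroup J /\ ideal_of J I.
Proof. by case=> JI [J0 [Jadd [Jopp Jmul]]]. Qed.

Lemma ideal_mul_closed J I : ideal_of J I -> mul_closed J.
Proof. by move=> [JI Jmul] x y Jx Jy; case: (Jmul _ _ Jx (JI _ Jy)). Qed.

Lemma sumprod_in J A B s : subgroup J -> (forall x y, A x -> B y -> J (rmul x y)) ->
  List.Forall (fun p => A p.1 /\ B p.2) s -> J (sumprod s).
Proof.
move=> [J0 [Jadd _]] Jmul; elim: s => [|p s IH] //= /List.Forall_cons_iff [[Ap Bp] Hs].
exact: Jadd (Jmul _ _ Ap Bp) (IH Hs).
Qed.

Lemma setmul_in J A B x : subgroup J -> (forall x y, A x -> B y -> J (rmul x y)) ->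
  setmul A B x -> J x.
Proof. by move=> HJ Hm [s [Hs ->]]; apply: sumprod_in Hm Hs. Qed.

Lemma setmul1 A B x y : A x -> B y -> setmul A B (rmul x y).
Proof. by move=> Ax By; exists [:: (x, y)]; split; [constructor | rewrite /sumprod /= addr0]. Qed.

Lemma setmul_mono A B A' B' x : included A A' -> included B B' ->
  setmul A B x -> setmul A' B' x.
Proof.
move=> AA' BB' [s [Hs ->]]; exists s; split => //.
by apply: List.Forall_impl Hs => p [/AA' ? /BB' ?].
Qed.

Lemma idempotent_setmul J A B : idempotent J -> included J A -> included J B ->
  included J (setmul A B).
Proof. by move=> Jid JA JB x /Jid; apply: setmul_mono. Qed.

Lemma big_closed (I : finType) (P : pred I) (F : I -> X) S : subgroup S ->
  (forall i, P i -> S (F i)) -> S (\big[radd/rzero]_(i | P i) F i).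
Proof. by move=> [S0 [Sadd _]] SF; apply: big_ind. Qed.

Lemma big2_single (I J : finType) (C : I -> J -> bool) (F : I -> J -> X) i0 j0 :
  (forall i j, C i j -> (i != i0) || (j != j0) -> F i j = rzero) ->
  \big[radd/rzero]_(i : I) \big[radd/rzero]_(j | C i j) F i j =
  if C i0 j0 then F i0 j0 else rzero.
Proof.
move=> F0.
rewrite (bigD1 i0) //= [X in radd _ X]big1 ?addr0; last first.
  by move=> i ni; apply: big1 => j Cij; apply: F0; rewrite ?ni.
rewrite big_mkcond (bigD1 j0) //= [X in radd _ X]big1 ?addr0 //.
by move=> j nj; case Cj: (C i0 j) => //; apply: F0; rewrite ?nj ?orbT.
Qed.

End RngTheory.

Section AdditiveMaps.
Variables (X Y : rng) (S : X -> Prop) (f : X -> Y).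
Hypotheses (HS : subgroup S)
  (f_add : forall x y, S x -> S y -> f (radd x y) = radd (f x) (f y)).

Lemma additive_on0 : f rzero = rzero.
Proof. by case: HS => S0 _; apply: (@addr_fix0 _ (f rzero)); rewrite -f_add // radd0. Qed.

Lemma additive_onN x : S x -> f (ropp x) = ropp (f x).
Proof.
case: HS => S0 [_ Sopp] Sx; apply: oppr_uniq.
by rewrite -f_add ?raddN ?additive_on0 //; apply: Sopp.
Qed.

Lemma big_morph_on (I : finType) (P : pred I) (F : I -> X) :
  (forall i, P i -> S (F i)) ->
  f (\big[radd/rzero]_(i | P i) F i) = \big[radd/rzero]_(i | P i) f (F i).
Proof.
case: HS => S0 [Sadd _] SF.
pose K (a : X) (b : Y) := S a /\ f a = b.
suff [] : K (\big[radd/rzero]_(i | P i) F i) (\big[radd/rzero]_(i | P i) f (F i)) by [].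
apply: big_rec2; first by split; [|exact: additive_on0].
by move=> i a b Pi [Sa <-]; split; [apply: Sadd | apply: f_add]; auto.
Qed.

Hypotheses (S_mul : mul_closed S)
  (f_mul : forall x y, S x -> S y -> f (rmul x y) = rmul (f x) (f y)).

Lemma morph_sumprod s : List.Forall (fun p => S p.1 /\ S p.2) s ->
  f (sumprod s) = sumprod (map (fun p => (f p.1, f p.2)) s).
Proof.
have [_ [Sadd _]] := HS.
elim: s => [|p s IH] => [_|]; first exact: additive_on0.
move=> /List.Forall_cons_iff [[S1 S2] Hs].
have Ss : S (sumprod s) by apply: sumprod_in Hs.
rewrite /sumprod /= -/(sumprod s) f_add ?f_mul ?IH //; exact: S_mul.
Qed.

Lemma image_idempotent J : included J S -> idempotent J -> idempotent (image f J).
Proof.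
move=> JS Jid _ [x [/Jid [s [Hs ->]] ->]].
have HsS : List.Forall (fun p => S p.1 /\ S p.2) s.
  by apply: List.Forall_impl Hs => p [/JS ? /JS ?].
rewrite morph_sumprod //; exists (map (fun p => (f p.1, f p.2)) s); split => //.
apply/List.Forall_map; apply: List.Forall_impl Hs => p [J1 J2] /=.
by split; [exists p.1 | exists p.2].
Qed.

End AdditiveMaps.

Section MultipliersAndIsomorphisms.
Variable X : rng.
Implicit Types (S A B I J : X -> Prop).

Lemma is_mult_stable I J Rm Lm : is_mult I Rm Lm -> subgroup I -> mul_closed I ->
  subgroup J -> ideal_of J I -> idempotent J -> forall x, J x -> J (Rm x) /\ J (Lm x).
Proof.
move=> [w_in [w_add [Rm_mul [Lm_mul _]]]] HI I_mul HJ [JI Jmul] Jid x /Jid [s [Hs ->]].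
have Rm_add x' y : I x' -> I y -> Rm (radd x' y) = radd (Rm x') (Rm y).
  by move=> Ix Iy; case: (w_add _ _ Ix Iy).
have Lm_add x' y : I x' -> I y -> Lm (radd x' y) = radd (Lm x') (Lm y).
  by move=> Ix Iy; case: (w_add _ _ Ix Iy).
have [J0 [Jadd _]] := HJ.
elim: s Hs => [_|p s IH].
  by rewrite /sumprod /= (additive_on0 HI Rm_add) (additive_on0 HI Lm_add).
move=> /List.Forall_cons_iff [[J1 J2] Hs]; have [IH1 IH2] := IH Hs.
have Ip : I (rmul p.1 p.2) by apply: I_mul; apply: JI.
have Is : I (sumprod s) by apply: sumprod_in Hs => // a b /JI Ia /JI Ib; apply: I_mul.
rewrite /sumprod /= -/(sumprod s) Rm_add // Lm_add // Rm_mul ?Lm_mul; try exact: JI.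
split; apply: Jadd => //.
- exact: (Jmul _ _ J1 (w_in _ (JI _ J2)).1).1.
- exact: (Jmul _ _ J2 (w_in _ (JI _ J1)).2).2.
Qed.

Lemma is_mult_ext I I' Rm Lm : seteq I I' -> is_mult I Rm Lm -> is_mult I' Rm Lm.
Proof.
move=> E [m1 [m2 [m3 [m4 m5]]]]; split; [|split; [|split; [|split]]].
- by move=> a /E /m1 [] /E ? /E.
- by move=> a b /E ? /E ?; apply: m2.
- by move=> a b /E ? /E ?; apply: m3.
- by move=> a b /E ? /E ?; apply: m4.
- by move=> a b /E ? /E ?; apply: m5.
Qed.

Lemma mult_inverse_ext I I' Rm Lm Rm' Lm' : seteq I I' ->
  mult_inverse I Rm Lm Rm' Lm' -> mult_inverse I' Rm Lm Rm' Lm'.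
Proof. by move=> E H x /E /H. Qed.

Lemma iso_ext A B A' B' f finv : seteq A A' -> seteq B B' ->
  ring_iso_on A B f finv -> ring_iso_on A' B' f finv.
Proof.
move=> EA EB [i1 [i2 [i3 [i4 [i5 i6]]]]].
split; [|split; [|split; [|split; [|split]]]].
- by move=> x /EA /i1 /EB.
- by move=> x /EB /i2 /EA.
- by move=> x /EA /i3.
- by move=> x /EB /i4.
- by move=> x y /EA ? /EA ?; apply: i5.
- by move=> x y /EA ? /EA ?; apply: i6.
Qed.

Lemma iso_image_ideal A B J f finv : ring_iso_on A B f finv -> subgroup A ->
  mul_closed A -> subgroup J -> ideal_of J A -> idempotent J ->
  subgroup (image f J) /\ ideal_of (image f J) B /\ idempotent (image f J).
Proof.
move=> [i1 [i2 [_ [i4 [i5 i6]]]]] HA A_mul HJ [JA Jmul] Jid.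
have [J0 [Jadd Jopp]] := HJ.
split; [split; [|split] | split; [split|]].
- by exists rzero; split => //; rewrite (additive_on0 HA i5).
- move=> _ _ [x [Jx ->]] [y [Jy ->]]; exists (radd x y); split; first exact: Jadd.
  by rewrite i5 //; apply: JA.
- move=> _ [x [Jx ->]]; exists (ropp x); split; first exact: Jopp.
  by rewrite (additive_onN HA i5) //; apply: JA.
- by move=> _ [x [/JA Ax ->]]; apply: i1.
- move=> _ y [x [Jx ->]] By; have Ay := i2 _ By.
  have [J1 J2] := Jmul _ _ Jx Ay.
  split; [exists (rmul x (finv y)) | exists (rmul (finv y) x)];
    by split => //; rewrite i6 ?i4 //; apply: JA.
- exact: (image_idempotent HA i5 A_mul i6 JA Jid).
Qed.

End MultipliersAndIsomorphisms.

Section GroupoidTheory.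
Variable G : groupoid.
Implicit Types g h k : G.

Lemma gd_inv g : gd (ginv g) = gr g. Proof. exact: ginv_d. Qed.
Lemma gr_inv g : gr (ginv g) = gd g. Proof. exact: ginv_r. Qed.
Lemma gr_mul g h : composable g h -> gr (gmul g h) = gr g.
Proof. by case/gcomp_dr. Qed.
Lemma gd_mul g h : composable g h -> gd (gmul g h) = gd h.
Proof. by case/gcomp_dr. Qed.
Lemma gr_gr g : gr (gr g) = gr g. Proof. by case: (gid_r g). Qed.
Lemma gd_gr g : gd (gr g) = gr g. Proof. by case: (gid_r g). Qed.
Lemma gr_gd g : gr (gd g) = gd g. Proof. by case: (gid_d g). Qed.
Lemma gmul_gr g : gmul (gr g) g = g. Proof. exact: gunitl. Qed.
Lemma gmulA g h k : composable g h -> composable h k ->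
  gmul (gmul g h) k = gmul g (gmul h k).
Proof. exact: gassoc. Qed.
Lemma id_gr g : is_identity (gr g). Proof. by exists (ginv g); rewrite gd_inv. Qed.
Lemma id_gd g : is_identity (gd g). Proof. by exists g. Qed.
Lemma composable_gd g : composable g (gd g). Proof. by rewrite /composable gr_gd. Qed.

End GroupoidTheory.

Section TwistedPartialActionTheory.
Variables (G : groupoid) (X : rng) (A : tpa_data G X).
Hypothesis HA : is_tpa A.
Local Notation D := (Dm A).
Implicit Types g h t : G.

Lemma tpa_ideal_gr g : is_ideal (D (gr g)). Proof. by case: HA. Qed.
Lemma tpa_ideal_in g : is_ideal_in (D g) (D (gr g)). Proof. by case: HA => _ []. Qed.
Lemma tpa_iso g : ring_iso_on (D (ginv g)) (D g) (al A g) (ali A g).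
Proof. by case: HA => _ [_ []]. Qed.
Lemma tpa_w g h : composable g h ->
  let I := setmul (D g) (D (gmul g h)) in
  is_mult I (wR A g h) (wL A g h) /\ is_mult I (wiR A g h) (wiL A g h) /\
  mult_inverse I (wR A g h) (wL A g h) (wiR A g h) (wiL A g h).
Proof. by case: HA => _ [_ [_ [H _]]]; apply: H. Qed.
Lemma tpa_al_id e : is_identity e -> forall a, D e a -> al A e a = a.
Proof. by case: HA => _ [_ [_ [_ [H _]]]] /H []. Qed.

Lemma tpa_idempotent g : idempotent (D g).
Proof.
move=> x; case: HA => _ [_ [_ [_ [_ H]]]].
by case: (H _ _ _ (composable_gd g) (composable_gd (gd g))) => /(_ x) [].
Qed.
Lemma tpa_al_image g h : composable g h ->
  seteq (image (al A g) (setmul (D (ginv g)) (D h))) (setmul (D g) (D (gmul g h))).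
Proof.
move=> c; case: HA => _ [_ [_ [_ [_ H]]]].
by case: (H _ _ _ c (composable_gd h)) => _ [_ []].
Qed.
Lemma tpa_al_comp g h : composable g h ->
  forall a, setmul (D (ginv h)) (D (gmul (ginv h) (ginv g))) a ->
  al A g (al A h a) = wiR A g h (wL A g h (al A (gmul g h) a)).
Proof.
move=> c; case: HA => _ [_ [_ [_ [_ H]]]].
by case: (H _ _ _ c (composable_gd h)) => _ [_ [_ []]].
Qed.
Lemma tpa_w_unitl g : forall a, D g a -> wR A (gr g) g a = a /\ wL A (gr g) g a = a.
Proof.
case: HA => _ [_ [_ [_ [_ H]]]].
by case: (H _ _ _ (composable_gd g) (composable_gd (gd g))) => _ [_ [_ [_ []]]].
Qed.
Lemma tpa_w_cocycle g h t : composable g h -> composable h t ->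
  forall a, setmul (setmul (D (ginv g)) (D h)) (D (gmul h t)) a ->
  wR A g (gmul h t) (al A g (wR A h t a)) = wR A (gmul g h) t (wR A g h (al A g a)).
Proof.
move=> c1 c2; case: HA => _ [_ [_ [_ [_ H]]]].
by case: (H _ _ _ c1 c2) => _ [_ [_ [_ [_ []]]]].
Qed.

Lemma tpa_subgroup g : subgroup (D g).
Proof. by case: (is_ideal_in_split (tpa_ideal_in g)). Qed.
Lemma tpa_ideal g : ideal_of (D g) (D (gr g)).
Proof. by case: (is_ideal_in_split (tpa_ideal_in g)). Qed.
Lemma tpa_sub_gr g : included (D g) (D (gr g)). Proof. by case: (tpa_ideal g). Qed.
Lemma tpa_mul_closed g : mul_closed (D g). Proof. exact: ideal_mul_closed (tpa_ideal g). Qed.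
Lemma tpa_0 g : D g rzero. Proof. by case: (tpa_subgroup g). Qed.
Lemma tpa_add g x y : D g x -> D g y -> D g (radd x y).
Proof. by case: (tpa_subgroup g) => _ [H _]; apply: H. Qed.

End TwistedPartialActionTheory.

Section FunctionSpace.
Variables (G : finType) (X : rng).
Implicit Types f : G -> X.

Definition fzero : G -> X := fun _ => rzero.
Definition fadd f f' : G -> X := fun g => radd (f g) (f' g).
Definition delta (g : G) (x : X) : G -> X := fun k => if k == g then x else rzero.

Lemma faddA f1 f2 f3 : fadd f1 (fadd f2 f3) = fadd (fadd f1 f2) f3.
Proof. by apply: functional_extensionality => g; rewrite /fadd raddA. Qed.
Lemma faddC f f' : fadd f f' = fadd f' f.
Proof. by apply: functional_extensionality => g; rewrite /fadd raddC. Qed.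
Lemma fadd0 f : fadd fzero f = f.
Proof. by apply: functional_extensionality => g; rewrite /fadd radd0. Qed.
Lemma faddN f : fadd (fun g => ropp (f g)) f = fzero.
Proof. by apply: functional_extensionality => g; rewrite /fadd raddN. Qed.

Lemma delta0 g : delta g rzero = fzero.
Proof. by apply: functional_extensionality => k; rewrite /delta; case: (k == g). Qed.
Lemma delta_add g x y : delta g (radd x y) = fadd (delta g x) (delta g y).
Proof.
apply: functional_extensionality => k; rewrite /fadd /delta.
by case: (k == g); rewrite ?radd0.
Qed.

Lemma fun_delta_decomp f :
  f = foldr (fun g acc => fadd (delta g (f g)) acc) fzero (index_enum G).
Proof.
apply: functional_extensionality => k.
have -> : forall s, foldr (fun g acc => fadd (delta g (f g)) acc) fzero s k =
    \big[radd/rzero]_(g <- s) delta g (f g) k.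
  by elim=> [|g s IH] /=; rewrite ?big_nil ?big_cons /fadd ?IH.
rewrite (bigD1 k) //= big1 ?addr0; first by rewrite /delta eqxx.
by move=> g; rewrite /delta eq_sym => /negbTE ->.
Qed.

Lemma fun_delta_ind (P : (G -> X) -> Prop) f : P fzero ->
  (forall f f', P f -> P f' -> P (fadd f f')) -> (forall g, P (delta g (f g))) -> P f.
Proof.
move=> P0 P_add P_delta; rewrite (fun_delta_decomp f).
by elim: (index_enum G) => //= g s IH; apply: P_add.
Qed.

Lemma delta_setmul_ind (P : (G -> X) -> Prop) (J : X -> Prop) g x :
  P fzero -> (forall f f', P f -> P f' -> P (fadd f f')) ->
  (forall y z, J y -> J z -> P (delta g (rmul y z))) -> setmul J J x -> P (delta g x).
Proof.
move=> P0 P_add P_mul [s [Hs ->]]; elim: s Hs => [_|p s IH]; first by rewrite delta0.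
move=> /List.Forall_cons_iff [[J1 J2] Hs].
by rewrite /sumprod /= delta_add; apply: P_add; [apply: P_mul | apply: IH].
Qed.

End FunctionSpace.

Arguments fzero {G X}.

Lemma proj1_sig_inj (Y : Type) (S : Y -> Prop) (a b : {x | S x}) :
  proj1_sig a = proj1_sig b -> a = b.
Proof. case: a b => [x hx] [y hy] /= e; subst; f_equal; exact: proof_irrelevance. Qed.

Definition additive_span (S : sring) (gen : scar S -> Prop) (x : scar S) : Prop :=
  forall P : scar S -> Prop, P (szero S) -> (forall y z, P y -> P z -> P (sadd y z)) ->
  (forall y, gen y -> P y) -> P x.

Section EmbeddedMoritaContext.
Variables (A B : sring) (Phi : scar A -> scar B) (M N : scar B -> Prop).

Hypotheses
  (addBA : forall x y z : scar B, sadd x (sadd y z) = sadd (sadd x y) z)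
  (addBC : forall x y : scar B, sadd x y = sadd y x)
  (add0B : forall x : scar B, sadd (szero B) x = x)
  (addNB : forall x : scar B, sadd (sopp x) x = szero B)
  (addAA : forall x y z : scar A, sadd x (sadd y z) = sadd (sadd x y) z)
  (addAC : forall x y : scar A, sadd x y = sadd y x)
  (add0A : forall x : scar A, sadd (szero A) x = x).
Hypotheses
  (memA_add : forall a a' : scar A, smem a -> smem a' -> smem (sadd a a'))
  (memA_mul : forall a a' : scar A, smem a -> smem a' -> smem (smul a a'))
  (memB_add : forall b b' : scar B, smem b -> smem b' -> smem (sadd b b'))
  (memB_mul : forall b b' : scar B, smem b -> smem b' -> smem (smul b b'))
  (smulDl : forall x y z : scar B, smem x -> smem y -> smem z ->
     smul (sadd x y) z = sadd (smul x z) (smul y z))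
  (smulDr : forall x y z : scar B, smem x -> smem y -> smem z ->
     smul x (sadd y z) = sadd (smul x y) (smul x z))
  (smulA : forall x y z : scar B, smem x -> smem y -> smem z ->
     smul x (smul y z) = smul (smul x y) z).
Hypotheses
  (Phi_add : forall a a', smem a -> smem a' -> Phi (sadd a a') = sadd (Phi a) (Phi a'))
  (Phi_mul : forall a a', smem a -> smem a' -> Phi (smul a a') = smul (Phi a) (Phi a'))
  (Phi_inj : forall a a', smem a -> smem a' -> Phi a = Phi a' -> a = a').
Hypotheses
  (M_mem : forall m, M m -> smem m) (M0 : M (szero B))
  (M_add : forall m m', M m -> M m' -> M (sadd m m')) (M_opp : forall m, M m -> M (sopp m))
  (M_mulr : forall m b, M m -> smem b -> M (smul m b))
  (M_Phi : forall a, smem a -> M (Phi a))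
  (N_mem : forall n, N n -> smem n) (N0 : N (szero B))
  (N_add : forall n n', N n -> N n' -> N (sadd n n')) (N_opp : forall n, N n -> N (sopp n))
  (N_mull : forall b n, smem b -> N n -> N (smul b n))
  (N_Phi : forall a, smem a -> N (Phi a))
  (MN_Phi : forall m n, M m -> N n -> exists2 a, smem a & smul m n = Phi a).
Hypotheses
  (A_span : forall a, smem a ->
     additive_span (fun a => smem a /\ exists m n, [/\ M m, N n & Phi a = smul m n]) a)
  (B_span : forall b, smem b ->
     additive_span (fun b => exists n m, [/\ N n, M m & b = smul n m]) b).

Section SubGroup.
Variables (S : scar B -> Prop) (S0 : S (szero B))
  (S_add : forall x y, S x -> S y -> S (sadd x y)) (S_opp : forall x, S x -> S (sopp x)).

Definition sub_add (x y : {x | S x}) : {x | S x} :=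
  exist _ (sadd (proj1_sig x) (proj1_sig y)) (S_add (proj2_sig x) (proj2_sig y)).
Definition sub_opp (x : {x | S x}) : {x | S x} := exist _ _ (S_opp (proj2_sig x)).

Lemma sub_addA x y z : sub_add x (sub_add y z) = sub_add (sub_add x y) z.
Proof. by apply: proj1_sig_inj; rewrite /= addBA. Qed.
Lemma sub_addC x y : sub_add x y = sub_add y x.
Proof. by apply: proj1_sig_inj; rewrite /= addBC. Qed.
Lemma sub_add0 x : sub_add (exist _ _ S0) x = x.
Proof. by apply: proj1_sig_inj; rewrite /= add0B. Qed.
Lemma sub_addN x : sub_add (sub_opp x) x = exist _ _ S0.
Proof. by apply: proj1_sig_inj; rewrite /= addNB. Qed.

Definition sub_abgrp : abgrp :=
  @AbGrp {x | S x} sub_add (exist _ _ S0) sub_opp sub_addA sub_addC sub_add0 sub_addN.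

(* The module actions and pairings are only constrained on ring elements, so
   products are pushed into the submodule with the junk value 0 elsewhere. *)
Definition insub_or0 (x : scar B) : {x | S x} :=
  match excluded_middle_informative (S x) with
  | left Sx => exist _ x Sx
  | right _ => exist _ _ S0
  end.

Lemma insub_or0K x : S x -> proj1_sig (insub_or0 x) = x.
Proof. by rewrite /insub_or0; case: excluded_middle_informative. Qed.

End SubGroup.

Definition Mmod := sub_abgrp M0 M_add M_opp.
Definition Nmod := sub_abgrp N0 N_add N_opp.
Local Notation Mty := {m : scar B | M m}.
Local Notation Nty := {n : scar B | N n}.
Let intoM : scar B -> Mty := insub_or0 M0.
Let intoN : scar B -> Nty := insub_or0 N0.

Definition embedded_inv (b : scar B) : scar A :=
  match excluded_middle_informative (exists a, smem a /\ b = Phi a) with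
  | left H => proj1_sig (constructive_indefinite_description _ H)
  | right _ => szero A
  end.

Lemma embedded_invP a : smem a -> smem (embedded_inv (Phi a)) /\ embedded_inv (Phi a) = a.
Proof.
move=> Sa; rewrite /embedded_inv; case: excluded_middle_informative => [H|[]]; last by exists a.
case: constructive_indefinite_description => a' /= [Sa' E]; split=> //.
by apply: Phi_inj; rewrite // -E.
Qed.

Lemma embedded_invK a : smem a -> embedded_inv (Phi a) = a.
Proof. by case/embedded_invP. Qed.

Lemma embedded_inv_mem b : (exists2 a, smem a & b = Phi a) -> smem (embedded_inv b).
Proof. by case=> a Sa ->; case: (embedded_invP Sa). Qed.

Lemma Phi_embedded_inv b : (exists2 a, smem a & b = Phi a) -> Phi (embedded_inv b) = b.
Proof. by case=> a Sa ->; rewrite embedded_invK. Qed.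

Definition actAM (a : scar A) (m : Mty) : Mty := intoM (smul (Phi a) (proj1_sig m)).
Definition actMB (m : Mty) (b : scar B) : Mty := intoM (smul (proj1_sig m) b).
Definition actBN (b : scar B) (n : Nty) : Nty := intoN (smul b (proj1_sig n)).
Definition actNA (n : Nty) (a : scar A) : Nty := intoN (smul (proj1_sig n) (Phi a)).
Definition pairA (m : Mty) (n : Nty) : scar A := embedded_inv (smul (proj1_sig m) (proj1_sig n)).
Definition pairB (n : Nty) (m : Mty) : scar B := smul (proj1_sig n) (proj1_sig m).

Lemma actAM_val a (m : Mty) : smem a -> proj1_sig (actAM a m) = smul (Phi a) (proj1_sig m).
Proof. by move=> Sa; apply: insub_or0K; apply: M_mulr (M_Phi Sa) (M_mem (proj2_sig m)). Qed.
Lemma actMB_val (m : Mty) b : smem b -> proj1_sig (actMB m b) = smul (proj1_sig m) b.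
Proof. by move=> Sb; apply: insub_or0K; apply: M_mulr (proj2_sig m) Sb. Qed.
Lemma actBN_val b (n : Nty) : smem b -> proj1_sig (actBN b n) = smul b (proj1_sig n).
Proof. by move=> Sb; apply: insub_or0K; apply: N_mull Sb (proj2_sig n). Qed.
Lemma actNA_val (n : Nty) a : smem a -> proj1_sig (actNA n a) = smul (proj1_sig n) (Phi a).
Proof. by move=> Sa; apply: insub_or0K; apply: N_mull (N_mem (proj2_sig n)) (N_Phi Sa). Qed.

Lemma pairA_emb (m : Mty) (n : Nty) : exists2 a, smem a & smul (proj1_sig m) (proj1_sig n) = Phi a.
Proof. exact: MN_Phi (proj2_sig m) (proj2_sig n). Qed.
Lemma Phi_pairA (m : Mty) (n : Nty) : Phi (pairA m n) = smul (proj1_sig m) (proj1_sig n).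
Proof. by rewrite Phi_embedded_inv //; case: (pairA_emb m n) => a Sa ->; exists a. Qed.
Lemma pairA_mem (m : Mty) (n : Nty) : smem (pairA m n).
Proof. by apply: embedded_inv_mem; case: (pairA_emb m n) => a Sa ->; exists a. Qed.
Lemma pairA_eq (m : Mty) (n : Nty) a :
  smem a -> Phi a = smul (proj1_sig m) (proj1_sig n) -> pairA m n = a.
Proof. by move=> Sa E; rewrite /pairA -E embedded_invK. Qed.

Lemma memM (m : Mty) : smem (proj1_sig m). Proof. exact: M_mem (proj2_sig m). Qed.
Lemma memN (n : Nty) : smem (proj1_sig n). Proof. exact: N_mem (proj2_sig n). Qed.
Lemma memPhi a : smem a -> smem (Phi a). Proof. by move/M_Phi/M_mem. Qed.

Lemma actAM_addr a (m m' : Mty) : smem a ->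
  actAM a (@aadd Mmod m m') = @aadd Mmod (actAM a m) (actAM a m').
Proof.
move=> Sa; apply: proj1_sig_inj; rewrite /= !actAM_val //=.
exact: smulDr (memPhi Sa) (memM m) (memM m').
Qed.

Lemma actAM_addl a a' (m : Mty) : smem a -> smem a' ->
  actAM (sadd a a') m = @aadd Mmod (actAM a m) (actAM a' m).
Proof.
move=> Sa Sa'; apply: proj1_sig_inj.
rewrite /= !actAM_val ?Phi_add //; last exact: memA_add.
exact: smulDl (memPhi Sa) (memPhi Sa') (memM m).
Qed.

Lemma actAM_mul a a' (m : Mty) : smem a -> smem a' ->
  actAM (smul a a') m = actAM a (actAM a' m).
Proof.
move=> Sa Sa'; have Saa := memA_mul Sa Sa'; apply: proj1_sig_inj.
rewrite !actAM_val // Phi_mul //.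
by rewrite smulA //; [exact: memPhi | exact: memPhi | exact (memM m)].
Qed.

Lemma actMB_addl b (m m' : Mty) : smem b ->
  actMB (@aadd Mmod m m') b = @aadd Mmod (actMB m b) (actMB m' b).
Proof.
move=> Sb; apply: proj1_sig_inj; rewrite /= !actMB_val //=.
exact: smulDl (memM m) (memM m') Sb.
Qed.

Lemma actMB_addr b b' (m : Mty) : smem b -> smem b' ->
  actMB m (sadd b b') = @aadd Mmod (actMB m b) (actMB m b').
Proof.
move=> Sb Sb'; apply: proj1_sig_inj; rewrite /= !actMB_val //; last exact: memB_add.
exact: smulDr (memM m) Sb Sb'.
Qed.

Lemma actMB_mul b b' (m : Mty) : smem b -> smem b' ->
  actMB m (smul b b') = actMB (actMB m b) b'.
Proof.
move=> Sb Sb'; apply: proj1_sig_inj; rewrite !actMB_val //; last exact: memB_mul.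
exact: smulA (memM m) Sb Sb'.
Qed.

Lemma actAM_MB a b (m : Mty) : smem a -> smem b ->
  actAM a (actMB m b) = actMB (actAM a m) b.
Proof.
move=> Sa Sb; apply: proj1_sig_inj; rewrite actAM_val // !actMB_val // actAM_val //.
exact: smulA (memPhi Sa) (memM m) Sb.
Qed.

Lemma actBN_addr b (n n' : Nty) : smem b ->
  actBN b (@aadd Nmod n n') = @aadd Nmod (actBN b n) (actBN b n').
Proof.
move=> Sb; apply: proj1_sig_inj; rewrite /= !actBN_val //=.
exact: smulDr Sb (memN n) (memN n').
Qed.

Lemma actBN_addl b b' (n : Nty) : smem b -> smem b' ->
  actBN (sadd b b') n = @aadd Nmod (actBN b n) (actBN b' n).
Proof.
move=> Sb Sb'; apply: proj1_sig_inj; rewrite /= !actBN_val //; last exact: memB_add.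
exact: smulDl Sb Sb' (memN n).
Qed.

Lemma actBN_mul b b' (n : Nty) : smem b -> smem b' ->
  actBN (smul b b') n = actBN b (actBN b' n).
Proof.
move=> Sb Sb'; apply: proj1_sig_inj; rewrite !actBN_val //; last exact: memB_mul.
by rewrite smulA //; exact (memN n).
Qed.

Lemma actNA_addl a (n n' : Nty) : smem a ->
  actNA (@aadd Nmod n n') a = @aadd Nmod (actNA n a) (actNA n' a).
Proof.
move=> Sa; apply: proj1_sig_inj; rewrite /= !actNA_val //=.
exact: smulDl (memN n) (memN n') (memPhi Sa).
Qed.

Lemma actNA_addr a a' (n : Nty) : smem a -> smem a' ->
  actNA n (sadd a a') = @aadd Nmod (actNA n a) (actNA n a').
Proof.
move=> Sa Sa'; apply: proj1_sig_inj.
rewrite /= !actNA_val ?Phi_add //; last exact: memA_add.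
exact: smulDr (memN n) (memPhi Sa) (memPhi Sa').
Qed.

Lemma actNA_mul a a' (n : Nty) : smem a -> smem a' ->
  actNA n (smul a a') = actNA (actNA n a) a'.
Proof.
move=> Sa Sa'; have Saa := memA_mul Sa Sa'; apply: proj1_sig_inj.
rewrite !actNA_val // Phi_mul //.
exact: smulA (memN n) (memPhi Sa) (memPhi Sa').
Qed.

Lemma actBN_NA a b (n : Nty) : smem a -> smem b ->
  actBN b (actNA n a) = actNA (actBN b n) a.
Proof.
move=> Sa Sb; apply: proj1_sig_inj; rewrite actBN_val // !actNA_val // actBN_val //.
exact: smulA Sb (memN n) (memPhi Sa).
Qed.

Lemma pairA_addl (m m' : Mty) (n : Nty) :
  pairA (@aadd Mmod m m') n = sadd (pairA m n) (pairA m' n).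
Proof.
have [P1 P2] := (pairA_mem m n, pairA_mem m' n).
apply: pairA_eq; first exact: memA_add.
rewrite Phi_add // !Phi_pairA /=.
by rewrite smulDl //; [exact (memM m) | exact (memM m') | exact (memN n)].
Qed.

Lemma pairA_addr (m : Mty) (n n' : Nty) :
  pairA m (@aadd Nmod n n') = sadd (pairA m n) (pairA m n').
Proof.
have [P1 P2] := (pairA_mem m n, pairA_mem m n').
apply: pairA_eq; first exact: memA_add.
rewrite Phi_add // !Phi_pairA /=.
by rewrite smulDr //; [exact (memM m) | exact (memN n) | exact (memN n')].
Qed.

Lemma pairA_balanced (m : Mty) (n : Nty) b : smem b ->
  pairA (actMB m b) n = pairA m (actBN b n).
Proof.
move=> Sb; rewrite /pairA actMB_val // actBN_val //.
by rewrite smulA //; [exact (memM m) | exact (memN n)].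
Qed.

Lemma pairA_actAM a (m : Mty) (n : Nty) : smem a ->
  pairA (actAM a m) n = smul a (pairA m n).
Proof.
move=> Sa; have P := pairA_mem m n.
apply: pairA_eq; first exact: memA_mul.
rewrite Phi_mul // Phi_pairA actAM_val //.
by rewrite smulA //; [exact: memPhi | exact (memM m) | exact (memN n)].
Qed.

Lemma pairA_actNA a (m : Mty) (n : Nty) : smem a ->
  pairA m (actNA n a) = smul (pairA m n) a.
Proof.
move=> Sa; have P := pairA_mem m n.
apply: pairA_eq; first exact: memA_mul.
rewrite Phi_mul // Phi_pairA actNA_val //.
by rewrite smulA //; [exact (memM m) | exact (memN n) | exact: memPhi].
Qed.

Lemma pairB_mem (n : Nty) (m : Mty) : smem (pairB n m).
Proof. exact: memB_mul (memN n) (memM m). Qed.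

Lemma pairB_addl (n n' : Nty) (m : Mty) :
  pairB (@aadd Nmod n n') m = sadd (pairB n m) (pairB n' m).
Proof. exact: smulDl (memN n) (memN n') (memM m). Qed.

Lemma pairB_addr (n : Nty) (m m' : Mty) :
  pairB n (@aadd Mmod m m') = sadd (pairB n m) (pairB n m').
Proof. exact: smulDr (memN n) (memM m) (memM m'). Qed.

Lemma pairB_balanced (n : Nty) (m : Mty) a : smem a ->
  pairB (actNA n a) m = pairB n (actAM a m).
Proof.
move=> Sa; rewrite /pairB actNA_val // actAM_val //.
by rewrite smulA //; [exact (memN n) | exact: memPhi | exact (memM m)].
Qed.

Lemma pairB_actBN b (n : Nty) (m : Mty) : smem b ->
  pairB (actBN b n) m = smul b (pairB n m).
Proof.
move=> Sb; rewrite /pairB actBN_val //.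
by rewrite smulA //; [exact (memN n) | exact (memM m)].
Qed.

Lemma pairB_actMB b (n : Nty) (m : Mty) : smem b ->
  pairB n (actMB m b) = smul (pairB n m) b.
Proof.
move=> Sb; rewrite /pairB actMB_val //.
by rewrite smulA //; [exact (memN n) | exact (memM m)].
Qed.

Lemma actAM_pairA (m : Mty) (n : Nty) (m' : Mty) :
  actAM (pairA m n) m' = actMB m (pairB n m').
Proof.
have [P1 P2] := (pairA_mem m n, pairB_mem n m').
apply: proj1_sig_inj; rewrite actAM_val // actMB_val //.
by rewrite Phi_pairA smulA //; [exact (memM m) | exact (memN n) | exact (memM m')].
Qed.

Lemma actBN_pairB (n : Nty) (m : Mty) (n' : Nty) :
  actBN (pairB n m) n' = actNA n (pairA m n').
Proof.
have [P1 P2] := (pairB_mem n m, pairA_mem m n').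
apply: proj1_sig_inj; rewrite actBN_val // actNA_val //.
by rewrite Phi_pairA smulA //; [exact (memN n) | exact (memM m) | exact (memN n')].
Qed.

Definition pairA_sum (s : seq (Mty * Nty)) : scar A :=
  foldr (fun p acc => sadd (pairA p.1 p.2) acc) (szero A) s.
Definition pairB_sum (s : seq (Nty * Mty)) : scar B :=
  foldr (fun p acc => sadd (pairB p.1 p.2) acc) (szero B) s.

Lemma pairA_onto a : smem a -> exists s, a = pairA_sum s.
Proof.
move=> Sa; apply: (A_span Sa (P := fun a => exists s, a = pairA_sum s)).
- by exists [::].
- move=> _ _ [s ->] [t ->]; exists (s ++ t).
  rewrite /pairA_sum; elim: s => [|p s IH] /=; first by rewrite add0A.
  by rewrite -addAA IH.
- move=> y [Sy [m [n [Mm Nn E]]]].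
  exists [:: (exist _ m Mm : Mty, exist _ n Nn : Nty)].
  by rewrite /pairA_sum /= (pairA_eq Sy) // addAC add0A.
Qed.

Lemma pairB_onto b : smem b -> exists s, b = pairB_sum s.
Proof.
move=> Sb; apply: (B_span Sb (P := fun b => exists s, b = pairB_sum s)).
- by exists [::].
- move=> _ _ [s ->] [t ->]; exists (s ++ t).
  rewrite /pairB_sum; elim: s => [|p s IH] /=; first by rewrite add0B.
  by rewrite -addBA IH.
- move=> y [n [m [Nn Mm ->]]].
  exists [:: (exist _ n Nn : Nty, exist _ m Mm : Mty)].
  by rewrite /pairB_sum /= addBC add0B.
Qed.

Theorem embedded_morita : MoritaEquiv A B.
Proof.
exists Mmod, Nmod, actAM, actMB, actBN, actNA, pairA, pairB.
do !split; [ exact: actAM_addr | exact: actAM_addl | exact: actAM_mul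
  | exact: actMB_addl | exact: actMB_addr | exact: actMB_mul | exact: actAM_MB
  | exact: actBN_addr | exact: actBN_addl | exact: actBN_mul
  | exact: actNA_addl | exact: actNA_addr | exact: actNA_mul | exact: actBN_NA
  | exact: pairA_mem | exact: pairA_addl | exact: pairA_addr | exact: pairA_balanced
  | exact: pairA_actAM | exact: pairA_actNA
  | exact: pairB_mem | exact: pairB_addl | exact: pairB_addr | exact: pairB_balanced
  | exact: pairB_actBN | exact: pairB_actMB
  | exact: actAM_pairA | exact: actBN_pairB | exact: pairA_onto | exact: pairB_onto ].
Qed.

End EmbeddedMoritaContext.

(* For a global action alpha_g(alpha_g^-1(a) b) = a alpha_g(b), so on the crossed product
   the product is given by this formula, which does not involve alpha_g^-1. *)
Definition mulB (G : groupoid) (T : rng) (beta : tpa_data G T) (f f' : G -> T) (k : G) : T :=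
  \big[radd/rzero]_(g : G) \big[radd/rzero]_(h | (gd g == gr h) && (gmul g h == k))
     wR beta g h (rmul (f g) (al beta g (f' h))).

Section Globalization.
Variables (G : groupoid) (T : rng) (beta : tpa_data G T).
Hypotheses (HB : is_tpa beta) (Hgl : is_global beta).
Local Notation E := (Dm beta).
Local Notation alB := (al beta).
Local Notation aliB := (ali beta).
Local Notation mul := (mulB beta).
Implicit Types g h k t : G.

Lemma globalE g x : E g x <-> E (gr g) x. Proof. exact: Hgl. Qed.

Lemma Egr_subgroup g : subgroup (E (gr g)).
Proof. by case: (is_ideal_in_split (tpa_ideal_gr HB g)). Qed.
Lemma Egr0 g : E (gr g) rzero. Proof. by case: (Egr_subgroup g). Qed.
Lemma Egr_add g x y : E (gr g) x -> E (gr g) y -> E (gr g) (radd x y).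
Proof. by case: (Egr_subgroup g) => _ [H _]; apply: H. Qed.
Lemma Egr_mulr g x y : E (gr g) x -> E (gr g) (rmul x y).
Proof.
by move=> Ex; case: (is_ideal_in_split (tpa_ideal_gr HB g)) => _ [_ H]; case: (H x y Ex I).
Qed.
Lemma Egr_idempotent g : idempotent (E (gr g)). Proof. exact: tpa_idempotent. Qed.

Lemma alB_iso g : ring_iso_on (E (gd g)) (E (gr g)) (alB g) (aliB g).
Proof.
apply: iso_ext (tpa_iso HB g) => x; last exact: globalE.
by rewrite globalE gr_inv.
Qed.
Lemma alB_in g x : E (gd g) x -> E (gr g) (alB g x).
Proof. by case: (alB_iso g) => h _; apply: h. Qed.
Lemma aliB_in g x : E (gr g) x -> E (gd g) (aliB g x).
Proof. by case: (alB_iso g) => _ [h _]; apply: h. Qed.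
Lemma aliB_al g x : E (gd g) x -> aliB g (alB g x) = x.
Proof. by case: (alB_iso g) => _ [_ [h _]]; apply: h. Qed.
Lemma alB_ali g x : E (gr g) x -> alB g (aliB g x) = x.
Proof. by case: (alB_iso g) => _ [_ [_ [h _]]]; apply: h. Qed.
Lemma alB_add g x y : E (gd g) x -> E (gd g) y -> alB g (radd x y) = radd (alB g x) (alB g y).
Proof. by case: (alB_iso g) => _ [_ [_ [_ [h _]]]]; apply: h. Qed.
Lemma alB_mul g x y : E (gd g) x -> E (gd g) y -> alB g (rmul x y) = rmul (alB g x) (alB g y).
Proof. by case: (alB_iso g) => _ [_ [_ [_ [_ h]]]]; apply: h. Qed.
Lemma alB0 g : alB g rzero = rzero.
Proof.
by apply: (additive_on0 (S := E (gd g))); [rewrite -gr_gd; exact: Egr_subgroup | exact: alB_add].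
Qed.
Lemma alB_id g x : E (gr g) x -> alB (gr g) x = x.
Proof. by move=> Ex; apply: (tpa_al_id HB (id_gr g)); rewrite globalE gr_gr. Qed.

Lemma w_domainE g h : composable g h -> seteq (setmul (E g) (E (gmul g h))) (E (gr g)).
Proof.
move=> c x; split.
- by apply: setmul_in; [exact: Egr_subgroup | move=> a b /globalE Ea _; apply: Egr_mulr].
- move/Egr_idempotent; apply: setmul_mono => y Ey; apply/globalE => //.
  by rewrite gr_mul.
Qed.

Section Twists.
Variables (g h : G) (c : composable g h).
Local Notation Eg := (E (gr g)).

Lemma wB_mult : is_mult Eg (wR beta g h) (wL beta g h).
Proof. by apply: is_mult_ext (w_domainE c) _; case: (tpa_w HB c). Qed.
Lemma wiB_mult : is_mult Eg (wiR beta g h) (wiL beta g h).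
Proof. by apply: is_mult_ext (w_domainE c) _; case: (tpa_w HB c) => _ []. Qed.
Lemma wB_inverse : mult_inverse Eg (wR beta g h) (wL beta g h) (wiR beta g h) (wiL beta g h).
Proof. by apply: mult_inverse_ext (w_domainE c) _; case: (tpa_w HB c) => _ []. Qed.

Lemma wR_in x : Eg x -> Eg (wR beta g h x). Proof. by case: wB_mult => H _ /H []. Qed.
Lemma wL_in x : Eg x -> Eg (wL beta g h x). Proof. by case: wB_mult => H _ /H []. Qed.
Lemma wiR_in x : Eg x -> Eg (wiR beta g h x). Proof. by case: wiB_mult => H _ /H []. Qed.
Lemma wR_add x y : Eg x -> Eg y -> wR beta g h (radd x y) = radd (wR beta g h x) (wR beta g h y).
Proof. by case: wB_mult => _ [H _] Ex Ey; case: (H _ _ Ex Ey). Qed.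
Lemma wR_mul x y : Eg x -> Eg y -> wR beta g h (rmul x y) = rmul x (wR beta g h y).
Proof. by case: wB_mult => _ [_ [H _]]; apply: H. Qed.
Lemma wR_wL x y : Eg x -> Eg y -> rmul (wR beta g h x) y = rmul x (wL beta g h y).
Proof. by case: wB_mult => _ [_ [_ [_ H]]]; apply: H. Qed.
Lemma wR_wiR x : Eg x -> wR beta g h (wiR beta g h x) = x.
Proof. by move=> /wB_inverse [_ [_ []]]. Qed.
Lemma wR0 : wR beta g h rzero = rzero.
Proof. exact: additive_on0 (Egr_subgroup g) wR_add. Qed.

End Twists.

Lemma alB_comp g h : composable g h -> forall x, E (gd h) x ->
  alB g (alB h x) = wiR beta g h (wL beta g h (alB (gmul g h) x)).
Proof.
move=> c x Ex; apply: (tpa_al_comp HB c).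
rewrite -gr_gd in Ex; apply: (idempotent_setmul (J := E (gr (gd h)))) Ex.
- exact: Egr_idempotent.
- by move=> y; rewrite gr_gd => Ey; apply/globalE; rewrite gr_inv.
- move=> y; rewrite gr_gd => Ey; apply/globalE; rewrite gr_mul ?gr_inv //.
  by rewrite /composable gd_inv gr_inv.
Qed.

Lemma wB_cocycle g h t : composable g h -> composable h t -> forall x, E (gd g) x ->
  wR beta g (gmul h t) (alB g (wR beta h t x)) =
  wR beta (gmul g h) t (wR beta g h (alB g x)).
Proof.
move=> c1 c2 x Ex; apply: (tpa_w_cocycle HB c1 c2).
rewrite -gr_gd in Ex; apply: (idempotent_setmul (J := E (gr (gd g)))) Ex.
- exact: Egr_idempotent.
- apply: idempotent_setmul; first exact: Egr_idempotent.
  + by move=> y; rewrite gr_gd => Ey; apply/globalE; rewrite gr_inv.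
  + by move=> y; rewrite gr_gd => Ey; apply/globalE; rewrite -c1.
- by move=> y; rewrite gr_gd => Ey; apply/globalE; rewrite gr_mul // -c1.
Qed.

(* The coefficient identity behind associativity of T x G: the cocycle identity for w
   together with alpha_g alpha_h = w_{g,h} alpha_{gh} w_{g,h}^-1. *)
Lemma twisted_assoc g h t a b c : composable g h -> composable h t ->
  E (gr g) a -> E (gr h) b -> E (gr t) c ->
  wR beta (gmul g h) t (rmul (wR beta g h (rmul a (alB g b))) (alB (gmul g h) c)) =
  wR beta g (gmul h t) (rmul a (alB g (wR beta h t (rmul b (alB h c))))).
Proof.
move=> c1 c2 Ea Eb Ec.
have rgh : gr (gmul g h) = gr g by apply: gr_mul.
have c3 : composable (gmul g h) t by rewrite /composable gd_mul.
have c4 : composable g (gmul h t) by rewrite /composable gr_mul.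
have Ebg : E (gd g) b by rewrite c1.
have Ech : E (gd h) c by rewrite c2.
have Ehc : E (gd g) (alB h c) by rewrite c1; apply: alB_in.
have Ey : E (gd g) (rmul b (alB h c)) by rewrite c1; apply: Egr_mulr.
have Eab : E (gr g) (rmul a (alB g b)) by apply: Egr_mulr.
have Egb : E (gr g) (alB g b) by apply: alB_in.
have Eghc : E (gr g) (alB (gmul g h) c) by rewrite -rgh; apply: alB_in; rewrite gd_mul.
have EwL : E (gr g) (wL beta g h (alB (gmul g h) c)) by apply: (wL_in c1).
have EwiL : E (gr g) (wiR beta g h (wL beta g h (alB (gmul g h) c))) by apply: (wiR_in c1).
have EwRy : E (gd g) (wR beta h t (rmul b (alB h c))) by rewrite c1; apply: (wR_in c2); rewrite -c1.
rewrite (wR_wL c1) // [in RHS](wR_mul c4) //; last exact: alB_in.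
rewrite (wB_cocycle c1 c2) // (alB_mul Ebg Ehc) (alB_comp c1) // (wR_mul c1) //.
have Ea' : E (gr (gmul g h)) a by rewrite rgh.
have Ebw : E (gr (gmul g h)) (rmul (alB g b) (wL beta g h (alB (gmul g h) c))).
  by rewrite rgh; apply: Egr_mulr.
by rewrite (wR_wiR c1) // -(wR_mul c3) // rmulA.
Qed.

Definition inB (f : G -> T) := forall g, E (gr g) (f g).

Lemma inB_smem f : inB f <-> @smem (crossed beta) f.
Proof. by split=> Sf g; apply/(globalE g); apply: Sf. Qed.
Lemma inB0 : inB fzero. Proof. by move=> g; apply: Egr0. Qed.
Lemma inB_add f f' : inB f -> inB f' -> inB (fadd f f').
Proof. by move=> Sf Sf' g; apply: Egr_add. Qed.
Lemma inB_delta g x : E (gr g) x -> inB (delta g x).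
Proof. by move=> Ex k; rewrite /delta; case: eqP => [->|_] //; apply: Egr0. Qed.

Lemma inB_ind (P : (G -> T) -> Prop) : P fzero ->
  (forall f f', inB f -> inB f' -> P f -> P f' -> P (fadd f f')) ->
  (forall g x, E (gr g) x -> P (delta g x)) -> forall f, inB f -> P f.
Proof.
move=> P0 P_add P_delta f Sf.
suff [] : inB f /\ P f by [].
apply: (fun_delta_ind (P := fun f => inB f /\ P f)) => [|f1 f2 [S1 P1] [S2 P2]|g].
- by split; [exact: inB0 |].
- by split; [exact: inB_add | exact: P_add].
- by split; [apply: inB_delta | apply: P_delta]; apply: Sf.
Qed.

Lemma smulB_eq f f' : inB f -> inB f' -> @smul (crossed beta) f f' = mul f f'.
Proof.
move=> Sf Sf'; apply: functional_extensionality => k /=.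
apply: eq_bigr => g _; apply: eq_bigr => h /andP [/eqP c _].
have Ef : E (gd g) (aliB g (f g)) by apply: aliB_in.
have Ef' : E (gd g) (f' h) by rewrite c; apply: Sf'.
by rewrite (alB_mul Ef Ef') alB_ali.
Qed.

Lemma mulB_delta g h a b : E (gr g) a -> E (gr h) b ->
  mul (delta g a) (delta h b) =
  if gd g == gr h then delta (gmul g h) (wR beta g h (rmul a (alB g b))) else fzero.
Proof.
move=> Ea Eb; apply: functional_extensionality => k; rewrite /mulB.
rewrite (big2_single (i0 := g) (j0 := h)).
  rewrite /delta !eqxx; case: eqP => c //=; case: eqP => e; case: eqP => e' //; congruence.
move=> g' h' /andP [/eqP c _] /orP [] ne; rewrite /delta (negbTE ne).
  by rewrite mul0r (wR0 c).
by rewrite alB0 mulr0 (wR0 c).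
Qed.

Lemma mulB_addl f1 f2 f : inB f1 -> inB f2 -> inB f ->
  mul (fadd f1 f2) f = fadd (mul f1 f) (mul f2 f).
Proof.
move=> S1 S2 S; apply: functional_extensionality => k; rewrite /mulB /fadd -big_split.
apply: eq_bigr => g _; rewrite -big_split; apply: eq_bigr => h /andP [/eqP c _].
have Ef : E (gr g) (alB g (f h)) by apply: alB_in; rewrite c; apply: S.
by rewrite rmulDl (wR_add c) //; apply: Egr_mulr.
Qed.

Lemma mulB_addr f f1 f2 : inB f -> inB f1 -> inB f2 ->
  mul f (fadd f1 f2) = fadd (mul f f1) (mul f f2).
Proof.
move=> S S1 S2; apply: functional_extensionality => k; rewrite /mulB /fadd -big_split.
apply: eq_bigr => g _; rewrite -big_split; apply: eq_bigr => h /andP [/eqP c _].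
have E1 : E (gd g) (f1 h) by rewrite c; apply: S1.
have E2 : E (gd g) (f2 h) by rewrite c; apply: S2.
by rewrite alB_add // rmulDr (wR_add c) //; apply: Egr_mulr; apply: S.
Qed.

Lemma mulB_0l f : mul fzero f = fzero.
Proof.
apply: functional_extensionality => k; rewrite /mulB big1 // => g _.
by apply: big1 => h /andP [/eqP c _]; rewrite mul0r (wR0 c).
Qed.

Lemma mulB_0r f : mul f fzero = fzero.
Proof.
apply: functional_extensionality => k; rewrite /mulB big1 // => g _.
by apply: big1 => h /andP [/eqP c _]; rewrite alB0 mulr0 (wR0 c).
Qed.

Lemma mulB_closed (S : G -> T -> Prop) f f' k : subgroup (S k) ->
  (forall g h, composable g h -> gmul g h = k -> S k (wR beta g h (rmul (f g) (alB g (f' h))))) ->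
  S k (mul f f' k).
Proof.
move=> HS Sw; apply: big_closed => // g _.
by apply: big_closed => // h /andP [/eqP c /eqP e]; apply: Sw.
Qed.

Lemma Egr_wR g h x y : composable g h -> E (gr g) x ->
  E (gr (gmul g h)) (wR beta g h (rmul x y)).
Proof. by move=> c Ex; rewrite gr_mul //; apply: (wR_in c); apply: Egr_mulr. Qed.

Lemma inB_mulB f f' : inB f -> inB f' -> inB (mul f f').
Proof.
move=> Sf _ k; apply: (mulB_closed (S := fun k => E (gr k))); first exact: Egr_subgroup.
by move=> g h c <-; apply: Egr_wR.
Qed.

Lemma mulB_delta_assoc g h t a b c : E (gr g) a -> E (gr h) b -> E (gr t) c ->
  mul (mul (delta g a) (delta h b)) (delta t c) = mul (delta g a) (mul (delta h b) (delta t c)).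
Proof.
move=> Ea Eb Ec; rewrite (mulB_delta Ea Eb) (mulB_delta Eb Ec).
have W2 : gd h = gr t -> E (gr (gmul h t)) (wR beta h t (rmul b (alB h c))).
  by move=> e2; apply: Egr_wR.
have W1 : gd g = gr h -> E (gr (gmul g h)) (wR beta g h (rmul a (alB g b))).
  by move=> e1; apply: Egr_wR.
case: (eqVneq (gd g) (gr h)) => e1; case: (eqVneq (gd h) (gr t)) => e2.
- rewrite (mulB_delta (W1 e1) Ec) (mulB_delta Ea (W2 e2)).
  by rewrite gd_mul // gr_mul // e2 e1 !eqxx gmulA // (twisted_assoc e1 e2).
- by rewrite mulB_0r (mulB_delta (W1 e1) Ec) gd_mul // (negbTE e2).
- by rewrite mulB_0l (mulB_delta Ea (W2 e2)) gr_mul // (negbTE e1).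
- by rewrite mulB_0l mulB_0r.
Qed.

Lemma mulB_assoc f1 f2 f3 : inB f1 -> inB f2 -> inB f3 ->
  mul (mul f1 f2) f3 = mul f1 (mul f2 f3).
Proof.
move=> S1 S2 S3; move: f1 S1 f2 S2 f3 S3.
apply: inB_ind => [|f1 f1' S1 S1' IH IH'|g a Ea] f2 S2 f3 S3.
- by rewrite !mulB_0l.
- by rewrite !mulB_addl ?IH ?IH' //; repeat apply: inB_mulB.
move: f2 S2 f3 S3; apply: inB_ind => [|f2 f2' S2 S2' IH IH'|h b Eb] f3 S3.
- by rewrite mulB_0r mulB_0l mulB_0r.
- rewrite mulB_addr ?mulB_addl ?mulB_addr ?IH ?IH' //;
    by repeat (apply: inB_mulB || apply: inB_delta).
move: f3 S3; apply: inB_ind => [|f3 f3' S3 S3' IH IH'|t c Ec].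
- by rewrite !mulB_0r.
- rewrite !mulB_addr ?IH ?IH' //;
    by repeat (apply: inB_mulB || apply: inB_delta).
exact: mulB_delta_assoc.
Qed.

Lemma w_stable g h (J : T -> Prop) : composable g h -> subgroup J ->
  ideal_of J (E (gr g)) -> idempotent J -> forall x, J x ->
  [/\ J (wR beta g h x), J (wL beta g h x) & J (wiR beta g h x)].
Proof.
move=> c HJ JE Jid x Jx.
have E_mul : mul_closed (E (gr g)) by move=> y z Ey _; apply: Egr_mulr.
have [Ew1 Ew2] := is_mult_stable (wB_mult c) (Egr_subgroup g) E_mul HJ JE Jid Jx.
have [Ewi _] := is_mult_stable (wiB_mult c) (Egr_subgroup g) E_mul HJ JE Jid Jx.
by [].
Qed.

Variables (R : rng) (alpha : tpa_data G R) (phi : G -> R -> T).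
Hypotheses (HA : is_tpa alpha) (HG : is_globalization alpha beta phi).
Local Notation D := (Dm alpha).
Local Notation smulA := (@smul (crossed alpha)).
Implicit Types (e : G) (m n : G -> T).

Lemma phi_in e x : is_identity e -> D e x -> E e (phi e x).
Proof. by case: HG => _ [H _] /H [H' _]; apply: H'. Qed.
Lemma phi_add e x y : is_identity e -> D e x -> D e y ->
  phi e (radd x y) = radd (phi e x) (phi e y).
Proof. by case: HG => _ [H _] /H [_ [H' _]]; apply: H'. Qed.
Lemma phi_mul e x y : is_identity e -> D e x -> D e y ->
  phi e (rmul x y) = rmul (phi e x) (phi e y).
Proof. by case: HG => _ [H _] /H [_ [_ [H' _]]]; apply: H'. Qed.
Lemma phi_inj e x y : is_identity e -> D e x -> D e y -> phi e x = phi e y -> x = y.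
Proof. by case: HG => _ [H _] /H [_ [_ [_ [H' _]]]]; apply: H'. Qed.
Lemma phi_ideal e : is_identity e -> is_ideal_in (image (phi e) (D e)) (E e).
Proof. by case: HG => _ [H _] /H [_ [_ [_ []]]]. Qed.
Lemma E_decomp g : seteq (E g)
  (fun x => exists c : G -> T,
     (forall h, gr h = gr g -> image (alB h) (image (phi (gd h)) (D (gd h))) (c h)) /\
     x = \big[@radd T/@rzero T]_(h : G | gr h == gr g) c h).
Proof. by case: HG => _ [_ []]. Qed.
Lemma phiD_cap g : seteq (image (phi (gr g)) (D g))
  (fun y => image (phi (gr g)) (D (gr g)) y /\
            image (alB g) (image (phi (gd g)) (D (gd g))) y).
Proof. by case: HG => _ [_ [_ []]]. Qed.
Lemma phi_al g a : D (ginv g) a -> alB g (phi (gd g) a) = phi (gr g) (al alpha g a).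
Proof. by case: HG => _ [_ [_ [_ []]]] H _; apply: H. Qed.
Lemma phi_wR g h : composable g h -> forall a, setmul (D g) (D (gmul g h)) a ->
  phi (gr g) (wR alpha g h a) = wR beta g h (phi (gr g) a).
Proof. by case: HG => _ [_ [_ [_ [_ H]]]] c a Da; case: (H g h c a Da). Qed.

Lemma D_sub_gr g x : D g x -> D (gr g) x. Proof. exact: tpa_sub_gr. Qed.
Lemma D0 g : D g rzero. Proof. exact: tpa_0. Qed.
Lemma phi0 e : is_identity e -> phi e rzero = rzero.
Proof. by move=> ie; apply: (additive_on0 (tpa_subgroup HA e)) => x y; apply: phi_add. Qed.

Definition embD e := image (phi e) (D e).
Definition transD g := image (alB g) (embD (gd g)).

Lemma embD_subgroup e : is_identity e -> subgroup (embD e).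
Proof. by move=> /phi_ideal /is_ideal_in_split []. Qed.
Lemma embD_ideal e : is_identity e -> ideal_of (embD e) (E e).
Proof. by move=> /phi_ideal /is_ideal_in_split []. Qed.
Lemma embD_sub e y : is_identity e -> embD e y -> E e y.
Proof. by move=> /embD_ideal [] H _; apply: H. Qed.
Lemma embD0 e : is_identity e -> embD e rzero.
Proof. by move=> /embD_subgroup []. Qed.
Lemma embD_idempotent e : is_identity e -> idempotent (embD e).
Proof.
move=> ie; rewrite /embD.
have phi_addD x y : D e x -> D e y -> phi e (radd x y) = radd (phi e x) (phi e y).
  exact: phi_add.
have phi_mulD x y : D e x -> D e y -> phi e (rmul x y) = rmul (phi e x) (phi e y).
  exact: phi_mul.
exact: (image_idempotent (tpa_subgroup HA e) phi_addD (tpa_mul_closed HA (g := e)) phi_mulD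
          (fun x Dx => Dx) (tpa_idempotent HA (g := e))).
Qed.

Lemma transD_props g :
  subgroup (transD g) /\ ideal_of (transD g) (E (gr g)) /\ idempotent (transD g).
Proof.
have ie := id_gd g.
apply: (iso_image_ideal (alB_iso g)).
- by rewrite -gr_gd; apply: Egr_subgroup.
- by move=> x y; rewrite -gr_gd => Ex _; apply: Egr_mulr.
- exact: embD_subgroup.
- exact: embD_ideal.
- exact: embD_idempotent.
Qed.
Lemma transD_subgroup g : subgroup (transD g). Proof. by case: (transD_props g). Qed.
Lemma transD_ideal g : ideal_of (transD g) (E (gr g)).
Proof. by case: (transD_props g) => _ []. Qed.
Lemma transD_idempotent g : idempotent (transD g). Proof. by case: (transD_props g) => _ []. Qed.
Lemma transD_sub g y : transD g y -> E (gr g) y.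
Proof. by case: (transD_ideal g) => H _; apply: H. Qed.
Lemma transD0 g : transD g rzero. Proof. by case: (transD_subgroup g). Qed.

Lemma embD_w g h x : composable g h -> embD (gr g) x ->
  [/\ embD (gr g) (wR beta g h x), embD (gr g) (wL beta g h x) & embD (gr g) (wiR beta g h x)].
Proof.
have ie := id_gr g.
move=> c; apply: (w_stable c); [exact: embD_subgroup | exact: embD_ideal |].
exact: embD_idempotent.
Qed.

Lemma transD_w g h k x : composable g h -> gr k = gr g -> transD k x ->
  [/\ transD k (wR beta g h x), transD k (wL beta g h x) & transD k (wiR beta g h x)].
Proof.
move=> c e; apply: (w_stable c); first exact: transD_subgroup.
- by rewrite -e; apply: transD_ideal.
- exact: transD_idempotent.
Qed.

Definition inM m := forall g, embD (gr g) (m g).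
Definition inN n := forall g, transD g (n g).
Definition inC (c : G -> T) := forall g, image (phi (gr g)) (D g) (c g).

Lemma inM_inB m : inM m -> inB m.
Proof. by move=> Mm g; apply: embD_sub (Mm g); apply: id_gr. Qed.
Lemma inN_inB n : inN n -> inB n.
Proof. by move=> Nn g; apply: transD_sub. Qed.
Lemma inC_inM c : inC c -> inM c.
Proof. by move=> Cc g; case: (phiD_cap g (c g)) => /(_ (Cc g)) []. Qed.
Lemma inC_inN c : inC c -> inN c.
Proof. by move=> Cc g; case: (phiD_cap g (c g)) => /(_ (Cc g)) []. Qed.

Lemma inM0 : inM fzero. Proof. by move=> g; apply: embD0; exact: id_gr. Qed.
Lemma inM_add m m' : inM m -> inM m' -> inM (fadd m m').
Proof. by move=> Mm Mm' g; case: (embD_subgroup (id_gr g)) => _ [H _]; apply: H. Qed.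
Lemma inM_opp m : inM m -> inM (fun g => ropp (m g)).
Proof. by move=> Mm g; case: (embD_subgroup (id_gr g)) => _ [_ H]; apply: H. Qed.
Lemma inN0 : inN fzero. Proof. by move=> g; apply: transD0. Qed.
Lemma inN_add n n' : inN n -> inN n' -> inN (fadd n n').
Proof. by move=> Nn Nn' g; case: (transD_subgroup g) => _ [H _]; apply: H. Qed.
Lemma inN_opp n : inN n -> inN (fun g => ropp (n g)).
Proof. by move=> Nn g; case: (transD_subgroup g) => _ [_ H]; apply: H. Qed.

Lemma inM_mul m b : inM m -> inB b -> inM (mul m b).
Proof.
move=> Mm Sb k; apply: (mulB_closed (S := fun k => embD (gr k))).
  exact: embD_subgroup (id_gr k).
move=> g h c <-; rewrite gr_mul //.
have Eb : E (gr g) (alB g (b h)) by apply: alB_in; rewrite c; exact: Sb.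
case: (embD_ideal (id_gr g)) => _ H.
by case: (embD_w c (H _ _ (Mm g) Eb).1).
Qed.

Lemma inN_mul b n : inB b -> inN n -> inN (mul b n).
Proof.
move=> Sb Nn k; apply: (mulB_closed (S := transD)); first exact: transD_subgroup.
move=> g h c <-.
have rgh : gr (gmul g h) = gr g by apply: gr_mul.
suff Qbn : transD (gmul g h) (rmul (b g) (alB g (n h))) by case: (transD_w c rgh Qbn).
have [p [Pp ->]] := Nn h.
have Ep : E (gd h) p by apply: embD_sub Pp; exact: id_gd.
have Qp : transD (gmul g h) (alB (gmul g h) p) by exists p; split => //; rewrite gd_mul.
have [_ Q1 _] := transD_w c rgh Qp.
have [_ _ Q2] := transD_w c rgh Q1.
rewrite alB_comp //; case: (transD_ideal (gmul g h)) => _ H; apply: (H _ _ Q2 _).2.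
by rewrite rgh; apply: Sb.
Qed.

Lemma inC_mul m n : inM m -> inN n -> inC (mul m n).
Proof.
move=> Mm Nn k; apply/(phiD_cap k); split.
- exact: (inM_mul Mm (inN_inB Nn) k).
- exact: (inN_mul (inM_inB Mm) Nn k).
Qed.

Definition Phi (a : G -> R) : G -> T := fun g => phi (gr g) (a g).
Definition inA (a : G -> R) := forall g, D g (a g).

Lemma inA_add a a' : inA a -> inA a' -> inA (fadd a a').
Proof. by move=> Sa Sa' g; apply: tpa_add. Qed.
Lemma inA_delta g x : D g x -> inA (delta g x).
Proof. by move=> Dx k; rewrite /delta; case: eqP => [->|_] //; apply: D0. Qed.

Lemma Phi_inC a : inA a -> inC (Phi a).
Proof. by move=> Sa g; exists (a g). Qed.
Lemma Phi_inB a : inA a -> inB (Phi a).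
Proof. by move/Phi_inC/inC_inM/inM_inB. Qed.
Lemma Phi_add a a' : inA a -> inA a' -> Phi (fadd a a') = fadd (Phi a) (Phi a').
Proof.
move=> Sa Sa'; apply: functional_extensionality => g; rewrite /Phi /fadd.
by rewrite phi_add //; [exact: id_gr | apply: D_sub_gr | apply: D_sub_gr].
Qed.
Lemma Phi_delta g x : Phi (delta g x) = delta g (phi (gr g) x).
Proof.
apply: functional_extensionality => k; rewrite /Phi /delta.
by case: eqP => [->|_] //; apply: phi0; exact: id_gr.
Qed.
Lemma Phi_inj a a' : inA a -> inA a' -> Phi a = Phi a' -> a = a'.
Proof.
move=> Sa Sa' E; apply: functional_extensionality => g.
apply: (phi_inj (id_gr g)); try exact: D_sub_gr.
exact: (congr1 (fun f => f g) E).
Qed.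

Lemma inC_Phi c : inC c -> exists2 a, inA a & c = Phi a.
Proof.
move=> Cc; exists (fun g => proj1_sig (constructive_indefinite_description _ (Cc g))).
  by move=> g; case: constructive_indefinite_description => x [].
apply: functional_extensionality => g; rewrite /Phi.
by case: constructive_indefinite_description => x [].
Qed.

Lemma termA_in g h x y : composable g h -> D g x -> D h y ->
  setmul (D g) (D (gmul g h)) (al alpha g (rmul (ali alpha g x) y)).
Proof.
move=> c Dx Dy; have [_ [ali_in _]] := tpa_iso HA g.
apply/(tpa_al_image HA c); eexists; split; last reflexivity.
by apply: setmul1 => //; apply: ali_in.
Qed.

Lemma setmul_sub_D g h z : composable g h -> setmul (D g) (D (gmul g h)) z -> D (gmul g h) z.
Proof.
move=> c; apply: setmul_in; first exact: tpa_subgroup.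
move=> u v Du Dv; case: (tpa_ideal HA (gmul g h)) => _ H.
by apply: (H v u Dv _).2; rewrite gr_mul //; apply: D_sub_gr.
Qed.

Lemma termA_w_in g h x y : composable g h -> D g x -> D h y ->
  D (gmul g h) (wR alpha g h (al alpha g (rmul (ali alpha g x) y))).
Proof.
move=> c Dx Dy; apply: setmul_sub_D => //.
by case: (tpa_w HA c) => [[w_in _] _]; case: (w_in _ (termA_in c Dx Dy)).
Qed.

Lemma inA_mul a a' : inA a -> inA a' -> inA (smulA a a').
Proof.
move=> Sa Sa' k; apply: big_closed => [|g _]; first exact: tpa_subgroup.
apply: big_closed => [|h /andP [/eqP c /eqP <-]]; first exact: tpa_subgroup.
exact: termA_w_in.
Qed.

Lemma Phi_term g h x y : composable g h -> D g x -> D h y ->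
  phi (gr g) (wR alpha g h (al alpha g (rmul (ali alpha g x) y))) =
  wR beta g h (rmul (phi (gr g) x) (alB g (phi (gr h) y))).
Proof.
move=> c Dx Dy; rewrite phi_wR //; last exact: termA_in.
congr (wR beta g h _).
have [_ [ali_in [_ [al_ali _]]]] := tpa_iso HA g.
set u := ali alpha g x.
have Du : D (ginv g) u by apply: ali_in.
have Du' : D (gd g) u by rewrite -gr_inv; apply: D_sub_gr.
have Dy' : D (gd g) y by rewrite c; apply: D_sub_gr.
have Duy : D (ginv g) (rmul u y).
  by case: (tpa_ideal HA (ginv g)) => _ H; apply: (H _ _ Du _).1; rewrite gr_inv.
rewrite -phi_al // phi_mul //; last exact: id_gd.
rewrite alB_mul; try by apply: phi_in => //; exact: id_gd.
by rewrite phi_al // al_ali // c.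
Qed.

Lemma Phi_mul a a' : inA a -> inA a' -> Phi (smulA a a') = mul (Phi a) (Phi a').
Proof.
move=> Sa Sa'; apply: functional_extensionality => k; rewrite /Phi /mulB /=.
have phi_addk x y : D (gr k) x -> D (gr k) y ->
    phi (gr k) (radd x y) = radd (phi (gr k) x) (phi (gr k) y).
  by apply: phi_add; exact: id_gr.
have Dterm g h : (gd g == gr h) && (gmul g h == k) ->
    D (gr k) (wR alpha g h (al alpha g (rmul (ali alpha g (a g)) (a' h)))).
  by move=> /andP [/eqP c /eqP <-]; apply: D_sub_gr; apply: termA_w_in.
have HDk := tpa_subgroup HA (gr k).
rewrite (big_morph_on HDk phi_addk); last first.
  by move=> g _; apply: big_closed => // h; apply: Dterm.
apply: eq_bigr => g _; rewrite (big_morph_on HDk phi_addk); last exact: Dterm.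
apply: eq_bigr => h /andP [/eqP c /eqP <-].
by rewrite gr_mul // Phi_term.
Qed.

Local Notation smemB := (@smem (crossed beta)).
Local Notation smulB := (@smul (crossed beta)).

Lemma crossedB_add_mem f f' : smemB f -> smemB f' -> smemB (fadd f f').
Proof. by move=> /inB_smem Sf /inB_smem Sf'; apply/inB_smem; apply: inB_add. Qed.

Lemma crossedB_mul_mem f f' : smemB f -> smemB f' -> smemB (smulB f f').
Proof.
by move=> /inB_smem Sf /inB_smem Sf'; apply/inB_smem; rewrite smulB_eq //; apply: inB_mulB.
Qed.

Lemma crossedB_mulDl x y z : smemB x -> smemB y -> smemB z ->
  smulB (fadd x y) z = fadd (smulB x z) (smulB y z).
Proof.
move=> /inB_smem Sx /inB_smem Sy /inB_smem Sz.
by rewrite !smulB_eq //; [exact: mulB_addl | exact: inB_add].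
Qed.

Lemma crossedB_mulDr x y z : smemB x -> smemB y -> smemB z ->
  smulB x (fadd y z) = fadd (smulB x y) (smulB x z).
Proof.
move=> /inB_smem Sx /inB_smem Sy /inB_smem Sz.
by rewrite !smulB_eq //; [exact: mulB_addr | exact: inB_add].
Qed.

Lemma crossedB_mulA x y z : smemB x -> smemB y -> smemB z ->
  smulB x (smulB y z) = smulB (smulB x y) z.
Proof.
move=> /inB_smem Sx /inB_smem Sy /inB_smem Sz.
by rewrite !smulB_eq ?mulB_assoc //; apply: inB_mulB.
Qed.

Lemma Phi_smul a a' : inA a -> inA a' -> Phi (smulA a a') = smulB (Phi a) (Phi a').
Proof. by move=> Sa Sa'; rewrite Phi_mul // smulB_eq //; exact: Phi_inB. Qed.

Lemma inM_mem m : inM m -> smemB m.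
Proof. by move/inM_inB/inB_smem. Qed.
Lemma inN_mem n : inN n -> smemB n.
Proof. by move/inN_inB/inB_smem. Qed.
Lemma inM_smul m b : inM m -> smemB b -> inM (smulB m b).
Proof. by move=> Mm /inB_smem Sb; rewrite smulB_eq //; [apply: inM_mul | apply: inM_inB]. Qed.
Lemma inN_smul b n : smemB b -> inN n -> inN (smulB b n).
Proof. by move=> /inB_smem Sb Nn; rewrite smulB_eq //; [apply: inN_mul | apply: inN_inB]. Qed.
Lemma inM_Phi a : inA a -> inM (Phi a).
Proof. by move/Phi_inC/inC_inM. Qed.
Lemma inN_Phi a : inA a -> inN (Phi a).
Proof. by move/Phi_inC/inC_inN. Qed.
Lemma inMN_Phi m n : inM m -> inN n -> exists2 a, inA a & smulB m n = Phi a.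
Proof.
move=> Mm Nn; rewrite smulB_eq; [exact: inC_Phi (inC_mul Mm Nn) | exact: inM_inB | exact: inN_inB].
Qed.

Lemma delta_factor_A g x1 x2 : D g x1 -> D g x2 ->
  exists m n, [/\ inM m, inN n & Phi (delta g (rmul x1 x2)) = smulB m n].
Proof.
move=> D1 D2; have [D1' D2'] := (D_sub_gr D1, D_sub_gr D2).
have E1 : E (gr (gr g)) (phi (gr g) x1) by rewrite gr_gr; apply: phi_in (id_gr g) D1'.
have E2 : E (gr g) (phi (gr g) x2) by apply: phi_in (id_gr g) D2'.
exists (delta (gr g) (phi (gr g) x1)), (delta g (phi (gr g) x2)); split.
- move=> k; rewrite /delta; case: eqP => [->|_]; last exact: embD0 (id_gr k).
  by rewrite gr_gr; exists x1.
- move=> k; rewrite /delta; case: eqP => [->|_]; last exact: transD0.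
  by case: (proj1 (phiD_cap g _) (ex_intro _ x2 (conj D2 erefl))).
rewrite smulB_eq; [|exact: inB_delta|exact: inB_delta].
rewrite (mulB_delta E1 E2) gd_gr eqxx gmul_gr alB_id //.
have E12 : E g (rmul (phi (gr g) x1) (phi (gr g) x2)).
  by apply/globalE; apply: Egr_mulr; apply: phi_in (id_gr g) D1'.
by rewrite Phi_delta (tpa_w_unitl HB E12).1 (phi_mul (id_gr g) D1' D2').
Qed.

(* With t = h^-1 k, the summand y1 y2 delta_k of T x G factors as
   (y1 delta_h) (alpha_h^-1(y2 w_{h,t}^-1) delta_t). *)
Lemma delta_factor_B k h y1 y2 : gr h = gr k -> transD h y1 -> transD h y2 ->
  exists n m, [/\ inN n, inM m & delta k (rmul y1 y2) = smulB n m].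
Proof.
move=> e Qy1 Qy2; set t := gmul (ginv h) k.
have ct : composable (ginv h) k by rewrite /composable gd_inv.
have rt : gr t = gd h by rewrite gr_mul // gr_inv.
have cht : composable h t by rewrite /composable rt.
have ht : gmul h t = k.
  rewrite /t -gmulA //; last by rewrite /composable gr_inv.
  by rewrite -/(gr h) e gmul_gr.
have [_ _ [p [Pp ep]]] := transD_w cht (erefl (gr h)) Qy2.
set m := aliB h (wiR beta h t y2).
have Ep : E (gd h) p by apply: embD_sub Pp; exact: id_gd.
have em : m = p by rewrite /m ep aliB_al.
exists (delta h y1), (delta t m); split.
- by move=> g; rewrite /delta; case: eqP => [->|_] //; exact: transD0.
- move=> g; rewrite /delta; case: eqP => [->|_]; last exact: embD0 (id_gr g).
  by rewrite rt em.
have E1 : E (gr h) y1 by apply: transD_sub.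
have E2 : E (gr t) m by rewrite rt em.
have Ew : E (gr h) (wiR beta h t y2) by rewrite ep; apply: alB_in.
rewrite smulB_eq; [|exact: inB_delta|exact: inB_delta].
rewrite (mulB_delta E1 E2) rt eqxx ht alB_ali //.
by rewrite (wR_mul cht) ?(wR_wiR cht) //; apply: transD_sub.
Qed.

Lemma crossedA_span a : inA a ->
  additive_span (S := crossed alpha)
    (fun a => inA a /\ exists m n, [/\ inM m, inN n & Phi a = smulB m n]) a.
Proof.
move=> Sa P P0 P_add P_gen; apply: fun_delta_ind => // g.
apply: (delta_setmul_ind (J := D g)) => //; last exact: (tpa_idempotent HA (Sa g)).
move=> y z Dy Dz; apply: P_gen; split; last exact: delta_factor_A.
exact: inA_delta (tpa_mul_closed HA Dy Dz).
Qed.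

Lemma crossedB_span b : smemB b ->
  additive_span (S := crossed beta) (fun b => exists n m, [/\ inN n, inM m & b = smulB n m]) b.
Proof.
move=> Sb P P0 P_add P_gen; apply: fun_delta_ind => // k.
have [c [Hc ->]] := proj1 (E_decomp k (b k)) (Sb k).
apply: (big_ind (fun y => P (delta k y))) => [|y z Py Pz|h /eqP e].
- by rewrite delta0.
- by rewrite delta_add; apply: P_add.
apply: (delta_setmul_ind (J := transD h)) => //; last exact: transD_idempotent (Hc h e).
by move=> y z Qy Qz; apply: P_gen; apply: delta_factor_B e Qy Qz.
Qed.

Theorem crossed_morita : MoritaEquiv (crossed alpha) (crossed beta).
Proof.
exact: (@embedded_morita (crossed alpha) (crossed beta) Phi inM inN
  (@faddA _ _) (@faddC _ _) (@fadd0 _ _) (@faddN _ _) (@faddA _ _) (@faddC _ _) (@fadd0 _ _)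
  inA_add inA_mul crossedB_add_mem crossedB_mul_mem
  crossedB_mulDl crossedB_mulDr crossedB_mulA Phi_add Phi_smul Phi_inj
  inM_mem inM0 inM_add inM_opp inM_smul inM_Phi
  inN_mem inN0 inN_add inN_opp inN_smul inN_Phi
  inMN_Phi crossedA_span crossedB_span).
Qed.

End Globalization.

Theorem mainTheorem4 (G : groupoid) (R T : rng)
    (alpha : tpa_data G R) (beta : tpa_data G T) (phi : G -> R -> T) :
  unital R ->
  is_tpa alpha ->
  is_tpa beta ->
  is_global beta ->
  is_globalization alpha beta phi ->
  MoritaEquiv (crossed alpha) (crossed beta).
Proof. by move=> _ HA HB Hgl HG; apply: (crossed_morita HB Hgl HA HG). Qed.
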